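(* Let Assumptions (G) and (S) hold and let the local clocks be synchronized from $t_0$ on. Let $Q\in\mathbb{R}^{n\times n}$ be symmetric positive definite, and let $P\in\mathbb{R}^{n\times n}$ be a symmetric positive definite solution of the algebraic Riccati equation $$PA+A^TP-PBB^TP+Q=0.$$ Set $K=-B^TP$, and choose constants $c_1\ge \frac{1}{2\lambda_2}$ and $c_2\ge f_0(N-1)$. Let $s_i$, $i=1,\dots,N$, be a solution on $[t_0,\infty)$ of the static algorithm (SA) with $s_i(t_0)=0$ for all $i$, and set $x_i=s_i+r_i$. Then $$\lim_{t\to\infty}\Big\|x_i(t)-\frac1N\sum_{k=1}^N r_k(t)\Big\|=0\qquad\text{for all } i=1,\dots,N.$$
   Context: Graph: $\mathcal{G}$ is a simple graph on the vertex set $\{1,\dots,N\}$. Assumption (G): $\mathcal{G}$ is undirected and connected. $\mathcal{N}_i$ denotes the neighbor set of node $i$ and $|\mathcal{N}_i|$ its cardinality. $L$ is the graph Laplacian (degree matrix minus adjacency matrix), and $\lambda_2$ is its smallest nonzero eigenvalue. Reference signals: $A\in\mathbb{R}^{n\times n}$ and $B\in\mathbb{R}^{n\times p}$ are constant matrices. Assumption (S): the pair $(A,B)$ is stabilizable. For $i=1,\dots,N$, the signal $r_i:[t_0,\infty)\to\mathbb{R}^n$ satisfies $\dot r_i(t)=Ar_i(t)+Bf_i(t)$, where $f_i:[t_0,\infty)\to\mathbb{R}^p$ is continuous with $\|f_i(t)\|\le f_0$ for all $t$, and $f_0>0$ is a constant. Local clocks: each agent $i$ has a local time $t_i(t)$.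 ''The local clocks are synchronized from $t_0$ on'' means that there is a constant $\eta$ such that $t_i(t)=t+\eta$ for all $i$ and all $t\ge t_0$. Boundary-layer function: for fixed constants $\varepsilon>0$ and $\varphi>0$, and for $\omega\in\mathbb{R}^p$, set $h_i(\omega,t_i)=\dfrac{\omega}{\|\omega\|+\varepsilon e^{-\varphi t_i}}$. Static algorithm (SA): for $i=1,\dots,N$ and $t\ge t_0$, $$\dot s_i=As_i+Bu_i,\qquad u_i=c_1\sum_{j\in\mathcal{N}_i}K(x_i-x_j)+c_2\sum_{j\in\mathcal{N}_i}h_i\big(K(x_i-x_j),t_i\big),\qquad x_i=s_i+r_i.$$ *)

From Stdlib Require Import Reals Relations.
Open Scope R_scope.

(* Vectors in R^n are functions nat -> R (only components 0..n-1 matter);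
   matrices are functions nat -> nat -> R (row, column). *)
Definition vec := nat -> R.
Definition mat := nat -> nat -> R.

Fixpoint fsum (n : nat) (f : nat -> R) : R :=
  match n with O => 0 | S k => fsum k f + f k end.

Definition vadd (u v : vec) : vec := fun k => u k + v k.
Definition vsub (u v : vec) : vec := fun k => u k - v k.
Definition vscale (c : R) (v : vec) : vec := fun k => c * v k.
Definition vsum (m : nat) (g : nat -> vec) : vec := fun k => fsum m (fun j => g j k).

Definition mv (m : nat) (M : mat) (v : vec) : vec := fun i => fsum m (fun j => M i j * v j).
Definition mmul (m : nat) (M N : mat) : mat := fun i j => fsum m (fun l => M i l * N l j).
Definition mtr (M : mat) : mat := fun i j => M j i.
Definition madd (M N : mat) : mat := fun i j => M i j + N i j.

Definition vnorm (n : nat) (v : vec) : R := sqrt (fsum n (fun k => v k ^ 2)).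

Definition symmetric (n : nat) (M : mat) : Prop :=
  forall i j, (i < n)%nat -> (j < n)%nat -> M i j = M j i.
Definition posdef (n : nat) (M : mat) : Prop :=
  forall v : vec, (exists k, (k < n)%nat /\ v k <> 0) ->
    0 < fsum n (fun i => v i * mv n M v i).
Definition sym_posdef (n : nat) (M : mat) : Prop := symmetric n M /\ posdef n M.

Definition deriv_on (t0 : R) (g g' : R -> R) : Prop :=
  forall t, t0 <= t -> forall eps, 0 < eps -> exists delta, 0 < delta /\
    forall h, h <> 0 -> Rabs h < delta -> t0 <= t + h ->
      Rabs ((g (t + h) - g t) / h - g' t) < eps.
Definition vderiv_on (t0 : R) (n : nat) (x x' : R -> vec) : Prop :=
  forall k, (k < n)%nat -> deriv_on t0 (fun t => x t k) (fun t => x' t k).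
Definition cont_on (t0 : R) (g : R -> R) : Prop :=
  forall t, t0 <= t -> forall eps, 0 < eps -> exists delta, 0 < delta /\
    forall s, t0 <= s -> Rabs (s - t) < delta -> Rabs (g s - g t) < eps.
Definition vcont_on (t0 : R) (n : nat) (x : R -> vec) : Prop :=
  forall k, (k < n)%nat -> cont_on t0 (fun t => x t k).

Definition tends_to_0 (g : R -> R) : Prop :=
  forall eps, 0 < eps -> exists T, forall t, T <= t -> Rabs (g t) < eps.

Definition stabilizable (n p : nat) (A B : mat) : Prop :=
  exists F : mat, forall z : R -> vec,
    vderiv_on 0 n z (fun t => mv n (madd A (mmul p B F)) (z t)) ->
    tends_to_0 (fun t => vnorm n (z t)).

Definition simple_undirected (N : nat) (adj : nat -> nat -> bool) : Prop :=
  (forall i j, (i < N)%nat -> (j < N)%nat -> adj i j = adj j i) /\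
  (forall i, (i < N)%nat -> adj i i = false).
Definition edge (N : nat) (adj : nat -> nat -> bool) : relation nat :=
  fun i j => (i < N)%nat /\ (j < N)%nat /\ adj i j = true.
Definition connected (N : nat) (adj : nat -> nat -> bool) : Prop :=
  forall i j, (i < N)%nat -> (j < N)%nat -> clos_refl_trans nat (edge N adj) i j.

Definition degree (N : nat) (adj : nat -> nat -> bool) (i : nat) : R :=
  fsum N (fun j => if adj i j then 1 else 0).
Definition laplacian (N : nat) (adj : nat -> nat -> bool) : mat :=
  fun i j => (if Nat.eqb i j then degree N adj i else 0) - (if adj i j then 1 else 0).

Definition is_eigenvalue (N : nat) (M : mat) (mu : R) : Prop :=
  exists v : vec, (exists k, (k < N)%nat /\ v k <> 0) /\
    forall i, (i < N)%nat -> mv N M v i = mu * v i.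
Definition smallest_nonzero_eigenvalue (N : nat) (M : mat) (lam : R) : Prop :=
  is_eigenvalue N M lam /\ lam <> 0 /\
  forall mu, is_eigenvalue N M mu -> mu <> 0 -> lam <= mu.

Definition nbsum (N : nat) (adj : nat -> nat -> bool) (i : nat) (g : nat -> vec) : vec :=
  vsum N (fun j => if adj i j then g j else (fun _ => 0)).

Definition hbl (p : nat) (epsl phi : R) (w : vec) (ti : R) : vec :=
  vscale (/ (vnorm p w + epsl * exp (- phi * ti))) w.

(* Let [xi_i = x_i - (1/N) sum_k x_k] be the disagreement. The inputs [u_i] sum to zero (the
   coupling is antisymmetric along edges), so [sum_i s_i] solves [z' = A z, z(t0) = 0] and vanishes;
   hence [x_i - (1/N) sum_k r_k = xi_i]. For [V = sum_i xi_i^T P xi_i] the Riccati equation turns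
   the drift into [|K xi_i|^2 - xi_i^T Q xi_i]; the linear coupling with [c1 >= 1/(2 lambda2)]
   dominates [sum_i |K xi_i|^2] by the Fiedler bound [lambda2 |z|^2 <= z^T L z] for [z] orthogonal
   to the constants; and the boundary-layer coupling with [c2 >= (N-1) f0] dominates the
   differences of the disturbances [f_i] up to an error [c2 eps e^(-phi t)] per edge. Thus
   [V' <= -a V + b e^(-phi t)] with [a > 0], and [V -> 0] by comparison. *)

From Stdlib Require Import Reals Lra Lia Arith Relations ClassicalEpsilon FunctionalExtensionality Classical.
From Coquelicot Require Derive.
Open Scope R_scope.

Lemma Rabs_le_between x a : Rabs x <= a -> - a <= x <= a.
Proof.
  intros H. pose proof (Rle_abs x). pose proof (Rle_abs (- x)).
  rewrite Rabs_Ropp in *. lra.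
Qed.

(** * Finite sums *)

Lemma fsum_ext n f g : (forall i, (i < n)%nat -> f i = g i) -> fsum n f = fsum n g.
Proof. induction n; simpl; intros H; auto. rewrite IHn, H; auto. Qed.

Lemma fsum_plus n f g : fsum n (fun i => f i + g i) = fsum n f + fsum n g.
Proof. induction n; simpl; [ring | rewrite IHn; ring]. Qed.

Lemma fsum_minus n f g : fsum n (fun i => f i - g i) = fsum n f - fsum n g.
Proof. induction n; simpl; [ring | rewrite IHn; ring]. Qed.

Lemma fsum_opp n f : fsum n (fun i => - f i) = - fsum n f.
Proof. induction n; simpl; [ring | rewrite IHn; ring]. Qed.

Lemma fsum_scal n c f : fsum n (fun i => c * f i) = c * fsum n f.
Proof. induction n; simpl; [ring | rewrite IHn; ring]. Qed.

Lemma fsum_scal_r n c f : fsum n (fun i => f i * c) = fsum n f * c.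
Proof. induction n; simpl; [ring | rewrite IHn; ring]. Qed.

Lemma fsum_const n c : fsum n (fun _ => c) = INR n * c.
Proof. induction n; simpl fsum; [simpl; ring | rewrite IHn, S_INR; ring]. Qed.

Lemma fsum_zero n f : (forall i, (i < n)%nat -> f i = 0) -> fsum n f = 0.
Proof. induction n; simpl; intros H; auto. rewrite IHn, H; auto; ring. Qed.

Lemma fsum_le n f g : (forall i, (i < n)%nat -> f i <= g i) -> fsum n f <= fsum n g.
Proof.
  induction n; simpl; intros H; [lra |].
  assert (fsum n f <= fsum n g) by (apply IHn; auto).
  specialize (H n (Nat.lt_succ_diag_r n)). lra.
Qed.

Lemma fsum_nonneg n f : (forall i, (i < n)%nat -> 0 <= f i) -> 0 <= fsum n f.
Proof. intros H. rewrite <- (fsum_zero n (fun _ => 0)) by auto. apply fsum_le; auto. Qed.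

Lemma fsum_swap n m (f : nat -> nat -> R) :
  fsum n (fun i => fsum m (fun j => f i j)) = fsum m (fun j => fsum n (fun i => f i j)).
Proof.
  induction n; simpl.
  - rewrite fsum_zero; auto.
  - rewrite IHn, <- fsum_plus. reflexivity.
Qed.

Lemma Rabs_fsum_le n f : Rabs (fsum n f) <= fsum n (fun i => Rabs (f i)).
Proof.
  induction n; simpl.
  - rewrite Rabs_R0; lra.
  - eapply Rle_trans; [apply Rabs_triang | lra].
Qed.

Lemma fsum_term_le n f k :
  (forall i, (i < n)%nat -> 0 <= f i) -> (k < n)%nat -> f k <= fsum n f.
Proof.
  induction n; simpl; intros H Hk; [lia |].
  assert (0 <= fsum n f) by (apply fsum_nonneg; auto).
  destruct (Nat.eq_dec k n).
  - subst. lra.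
  - assert (f k <= fsum n f) by (apply IHn; auto; lia).
    assert (0 <= f n) by auto. lra.
Qed.

Lemma fsum_two_terms_le n f j k : (forall i, (i < n)%nat -> 0 <= f i) ->
  (j < n)%nat -> (k < n)%nat -> j <> k -> f j + f k <= fsum n f.
Proof.
  induction n; simpl; intros H Hj Hk Hjk; [lia |].
  assert (0 <= fsum n f) by (apply fsum_nonneg; auto).
  destruct (Nat.eq_dec k n); destruct (Nat.eq_dec j n); try lia.
  - subst. assert (f j <= fsum n f) by (apply fsum_term_le; auto; lia). lra.
  - subst. assert (f k <= fsum n f) by (apply fsum_term_le; auto; lia). lra.
  - assert (f j + f k <= fsum n f) by (apply IHn; auto; lia).
    assert (0 <= f n) by auto. lra.
Qed.

Lemma fsum_nonneg_eq0 n f : (forall i, (i < n)%nat -> 0 <= f i) ->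
  fsum n f = 0 -> forall i, (i < n)%nat -> f i = 0.
Proof.
  intros H Hs i Hi. pose proof (fsum_term_le n f i H Hi). pose proof (H i Hi). lra.
Qed.

Lemma fsum_single n f i : (i < n)%nat ->
  (forall k, (k < n)%nat -> k <> i -> f k = 0) -> fsum n f = f i.
Proof.
  induction n; intros Hi H; [lia |]. simpl.
  destruct (Nat.eq_dec i n).
  - subst. rewrite fsum_zero; [ring |]. intros k Hk; apply H; lia.
  - rewrite IHn; [rewrite (H n) by lia; ring | lia | intros k Hk Hki; apply H; lia].
Qed.

Lemma fsum_indicator_neq n i : (i < n)%nat ->
  fsum n (fun k => if Nat.eqb k i then 0 else 1) = INR n - 1.
Proof.
  induction n; intros Hi; [lia |]. simpl fsum. rewrite S_INR.
  destruct (Nat.eq_dec i n).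
  - subst. rewrite Nat.eqb_refl, (fsum_ext n _ (fun _ => 1)).
    + rewrite fsum_const; ring.
    + intros k Hk. destruct (Nat.eqb_spec k n); [lia | auto].
  - rewrite IHn by lia. destruct (Nat.eqb_spec n i); [lia |]. ring.
Qed.

(** * Inner products and norms *)

Definition ip (m : nat) (a b : vec) : R := fsum m (fun k => a k * b k).

Lemma ip_ext m a a' b b' : (forall k, (k < m)%nat -> a k = a' k) ->
  (forall k, (k < m)%nat -> b k = b' k) -> ip m a b = ip m a' b'.
Proof. intros Ha Hb; unfold ip; apply fsum_ext; intros; rewrite Ha, Hb; auto. Qed.

Lemma ip_comm m a b : ip m a b = ip m b a.
Proof. unfold ip; apply fsum_ext; intros; ring. Qed.

Lemma ip_add_l m a b c : ip m (vadd a b) c = ip m a c + ip m b c.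
Proof. unfold ip, vadd. rewrite <- fsum_plus. apply fsum_ext; intros; ring. Qed.

Lemma ip_add_r m a b c : ip m a (vadd b c) = ip m a b + ip m a c.
Proof. unfold ip, vadd. rewrite <- fsum_plus. apply fsum_ext; intros; ring. Qed.

Lemma ip_sub_l m a b c : ip m (vsub a b) c = ip m a c - ip m b c.
Proof. unfold ip, vsub. rewrite <- fsum_minus. apply fsum_ext; intros; ring. Qed.

Lemma ip_sub_r m a b c : ip m a (vsub b c) = ip m a b - ip m a c.
Proof. unfold ip, vsub. rewrite <- fsum_minus. apply fsum_ext; intros; ring. Qed.

Lemma ip_scale_l m c v w : ip m (vscale c v) w = c * ip m v w.
Proof. unfold ip, vscale. rewrite <- fsum_scal. apply fsum_ext; intros; ring. Qed.

Lemma ip_scale_r m c v w : ip m v (vscale c w) = c * ip m v w.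
Proof. unfold ip, vscale. rewrite <- fsum_scal. apply fsum_ext; intros; ring. Qed.

Lemma ip_nonneg m a : 0 <= ip m a a.
Proof. apply fsum_nonneg; intros; apply Rle_0_sqr. Qed.

Lemma ip_zero_l m a b : (forall k, (k < m)%nat -> a k = 0) -> ip m a b = 0.
Proof. intros H; unfold ip; apply fsum_zero; intros; rewrite H; auto; ring. Qed.

Lemma ip_self_eq0 m a : ip m a a = 0 -> forall k, (k < m)%nat -> a k = 0.
Proof.
  intros H k Hk. apply Rsqr_0_uniq.
  exact (fsum_nonneg_eq0 m (fun k => a k * a k) (fun i _ => Rle_0_sqr (a i)) H k Hk).
Qed.

Lemma ip_self_pos m v : (exists k, (k < m)%nat /\ v k <> 0) -> 0 < ip m v v.
Proof.
  intros [k [Hk Hv]].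
  apply Rlt_le_trans with (v k * v k); [apply Rsqr_pos_lt; auto |].
  apply (fsum_term_le m (fun i => v i * v i)); auto. intros; apply Rle_0_sqr.
Qed.

Lemma vnorm_nonneg m a : 0 <= vnorm m a.
Proof. apply sqrt_pos. Qed.

Lemma vnorm_sq m a : vnorm m a * vnorm m a = ip m a a.
Proof.
  unfold vnorm. rewrite sqrt_sqrt by (apply fsum_nonneg; intros; simpl; nra).
  apply fsum_ext; intros; ring.
Qed.

Lemma vnorm_ext m a b : (forall k, (k < m)%nat -> a k = b k) -> vnorm m a = vnorm m b.
Proof. intros H; unfold vnorm; f_equal; apply fsum_ext; intros; rewrite H; auto. Qed.

Lemma vnorm_opp m a : vnorm m (fun k => - a k) = vnorm m a.
Proof. unfold vnorm; f_equal; apply fsum_ext; intros; ring. Qed.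

Lemma vnorm_sub_sym m a b : vnorm m (vsub a b) = vnorm m (vsub b a).
Proof. unfold vnorm, vsub; f_equal; apply fsum_ext; intros; ring. Qed.

Lemma vnorm_sub_diag m a : vnorm m (vsub a a) = 0.
Proof.
  unfold vnorm. rewrite fsum_zero; [apply sqrt_0 |]. intros; unfold vsub; simpl; ring.
Qed.

Lemma cauchy_schwarz m a b : ip m a b <= vnorm m a * vnorm m b.
Proof.
  pose proof (vnorm_nonneg m a) as Ha. pose proof (vnorm_nonneg m b) as Hb.
  destruct (Req_dec (vnorm m a) 0) as [Ha0 | Ha0].
  { rewrite (ip_zero_l m a b), Ha0; [lra |].
    apply ip_self_eq0. rewrite <- vnorm_sq, Ha0; ring. }
  destruct (Req_dec (vnorm m b) 0) as [Hb0 | Hb0].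
  { rewrite ip_comm, (ip_zero_l m b a), Hb0; [lra |].
    apply ip_self_eq0. rewrite <- vnorm_sq, Hb0; ring. }
  set (na := vnorm m a) in *. set (nb := vnorm m b) in *.
  (* expand  0 <= |a/na - b/nb|^2 = 2 - 2 <a,b>/(na nb) *)
  assert (Hs : 0 <= fsum m (fun k => (a k / na - b k / nb) * (a k / na - b k / nb)))
    by (apply fsum_nonneg; intros; apply Rle_0_sqr).
  rewrite (fsum_ext _ _ (fun k => / (na * na) * (a k * a k)
            + (- 2 / (na * nb)) * (a k * b k) + / (nb * nb) * (b k * b k))) in Hs
    by (intros; field; lra).
  rewrite !fsum_plus, !fsum_scal in Hs. fold (ip m a a) (ip m a b) (ip m b b) in Hs.
  rewrite <- !vnorm_sq in Hs. fold na nb in Hs.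
  assert (Hab : 0 < na * nb) by (apply Rmult_lt_0_compat; lra).
  replace (/ (na * na) * (na * na)) with 1 in Hs by (field; lra).
  replace (/ (nb * nb) * (nb * nb)) with 1 in Hs by (field; lra).
  apply Rmult_le_reg_r with (2 / (na * nb)); [apply Rdiv_lt_0_compat; lra |].
  replace (na * nb * (2 / (na * nb))) with 2 by (field; lra). lra.
Qed.

Lemma Rabs_ip_le m a b : Rabs (ip m a b) <= vnorm m a * vnorm m b.
Proof.
  apply Rabs_le. split; [| apply cauchy_schwarz].
  pose proof (cauchy_schwarz m (fun k => - a k) b) as H.
  rewrite vnorm_opp in H.
  replace (ip m (fun k => - a k) b) with (- ip m a b) in H
    by (unfold ip; rewrite <- fsum_opp; apply fsum_ext; intros; ring).
  lra.
Qed.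

Lemma vnorm_triangle m a b c : vnorm m (vsub a c) <= vnorm m (vsub a b) + vnorm m (vsub b c).
Proof.
  set (u := vsub a b). set (v := vsub b c).
  pose proof (vnorm_nonneg m u). pose proof (vnorm_nonneg m v).
  pose proof (vnorm_nonneg m (vsub a c)).
  apply Rsqr_incr_0_var; [| lra]. unfold Rsqr. rewrite vnorm_sq.
  rewrite (ip_ext m (vsub a c) (vadd u v) (vsub a c) (vadd u v))
    by (intros; unfold u, v, vsub, vadd; ring).
  rewrite !ip_add_l, (ip_comm m u (vadd u v)), (ip_comm m v (vadd u v)), !ip_add_l.
  rewrite (ip_comm m v u), <- !vnorm_sq. pose proof (cauchy_schwarz m u v). nra.
Qed.

(** * Matrices and quadratic forms *)

Definition qf (n : nat) (M : mat) (v : vec) : R := ip n v (mv n M v).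

Lemma mv_add m M v w i : mv m M (vadd v w) i = mv m M v i + mv m M w i.
Proof. unfold mv, vadd. rewrite <- fsum_plus; apply fsum_ext; intros; ring. Qed.

Lemma mv_sub m M v w i : mv m M (vsub v w) i = mv m M v i - mv m M w i.
Proof. unfold mv, vsub. rewrite <- fsum_minus; apply fsum_ext; intros; ring. Qed.

Lemma mv_scale m M c v i : mv m M (vscale c v) i = c * mv m M v i.
Proof. unfold mv, vscale. rewrite <- fsum_scal; apply fsum_ext; intros; ring. Qed.

Lemma mv_vsum m M N g i : mv m M (vsum N g) i = fsum N (fun j => mv m M (g j) i).
Proof.
  unfold mv, vsum. rewrite <- fsum_swap. apply fsum_ext; intros; symmetry; apply fsum_scal.
Qed.

Lemma mv_mmul n m M1 M2 v i : mv n (mmul m M1 M2) v i = mv m M1 (mv n M2 v) i.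
Proof.
  unfold mv, mmul.
  rewrite (fsum_ext n _ (fun j => fsum m (fun l => M1 i l * M2 l j * v j)))
    by (intros; rewrite <- fsum_scal_r; apply fsum_ext; intros; ring).
  rewrite fsum_swap. apply fsum_ext; intros.
  rewrite <- fsum_scal. apply fsum_ext; intros; ring.
Qed.

Lemma ip_mv_tr n m M v w : ip n (mv m M v) w = ip m v (mv n (mtr M) w).
Proof.
  unfold ip, mv, mtr.
  rewrite (fsum_ext n _ (fun i => fsum m (fun j => M i j * v j * w i)))
    by (intros; rewrite <- fsum_scal_r; apply fsum_ext; intros; ring).
  rewrite fsum_swap. apply fsum_ext; intros.
  rewrite <- fsum_scal. apply fsum_ext; intros; ring.
Qed.

Lemma ip_mv_symmetric n M v w : symmetric n M -> ip n v (mv n M w) = ip n w (mv n M v).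
Proof.
  intros HM. rewrite ip_comm, ip_mv_tr.
  apply ip_ext; auto. intros i Hi. unfold mv, mtr.
  apply fsum_ext; intros j Hj. rewrite HM; auto.
Qed.

Lemma qf_scale n M c v : qf n M (vscale c v) = c * c * qf n M v.
Proof.
  unfold qf, ip. rewrite <- fsum_scal.
  apply fsum_ext; intros. rewrite mv_scale; unfold vscale; ring.
Qed.

Lemma qf_le_entry_bound n M v :
  qf n M v <= fsum n (fun i => fsum n (fun j => Rabs (M i j))) * ip n v v.
Proof.
  assert (Hv : forall i, (i < n)%nat -> v i * v i <= ip n v v)
    by (intros; apply (fsum_term_le n (fun k => v k * v k)); auto; intros; apply Rle_0_sqr).
  assert (E : qf n M v = fsum n (fun i => fsum n (fun j => v i * M i j * v j))).
  { unfold qf, ip, mv. apply fsum_ext; intros. rewrite <- fsum_scal. apply fsum_ext; intros; ring. }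
  rewrite E. eapply Rle_trans; [apply Rle_abs |].
  eapply Rle_trans; [apply Rabs_fsum_le |]. rewrite <- fsum_scal_r. apply fsum_le; intros i Hi.
  eapply Rle_trans; [apply Rabs_fsum_le |]. rewrite <- fsum_scal_r. apply fsum_le; intros j Hj.
  assert (Rabs (v i) * Rabs (v j) <= ip n v v).
  { rewrite <- Rabs_mult. apply Rabs_le. pose proof (Hv i Hi). pose proof (Hv j Hj). split; nra. }
  rewrite !Rabs_mult. pose proof (Rabs_pos (M i j)).
  replace (Rabs (v i) * Rabs (M i j) * Rabs (v j)) with (Rabs (M i j) * (Rabs (v i) * Rabs (v j)))
    by ring.
  apply Rmult_le_compat_l; auto.
Qed.

Lemma Rabs_qf_le_entry_bound n M v :
  ip n v v = 1 -> Rabs (qf n M v) <= fsum n (fun i => fsum n (fun j => Rabs (M i j))).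
Proof.
  intros H. pose proof (qf_le_entry_bound n M v) as Hup.
  pose proof (qf_le_entry_bound n (fun i j => - M i j) v) as Hlo.
  assert (Eopp : qf n (fun i j => - M i j) v = - qf n M v).
  { unfold qf, ip, mv. rewrite <- fsum_opp. apply fsum_ext; intros k _.
    rewrite (fsum_ext n _ (fun j => - (M k j * v j))) by (intros; ring).
    rewrite fsum_opp; ring. }
  rewrite Eopp in Hlo.
  rewrite (fsum_ext n (fun i => fsum n (fun j => Rabs (- M i j))) (fun i => fsum n (fun j => Rabs (M i j))))
    in Hlo by (intros; apply fsum_ext; intros; apply Rabs_Ropp).
  rewrite H, Rmult_1_r in *. apply Rabs_le. lra.
Qed.

Section Riccati.
Variables (n p : nat) (A B Q P : mat).
Hypothesis HPsym : symmetric n P.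
Hypothesis HARE : forall i j, (i < n)%nat -> (j < n)%nat ->
  mmul n P A i j + mmul n (mtr A) P i j - mmul p (mmul n P B) (mmul n (mtr B) P) i j + Q i j = 0.

Lemma riccati_quadratic_identity z :
  2 * ip n (mv n A z) (mv n P z) = ip p (mv n (mmul n (mtr B) P) z) (mv n (mmul n (mtr B) P) z) - qf n Q z.
Proof.
  set (BtP := mmul n (mtr B) P).
  assert (E1 : ip n (mv n A z) (mv n P z) = ip n z (mv n (mmul n (mtr A) P) z)).
  { rewrite ip_mv_tr. apply ip_ext; auto. intros; rewrite mv_mmul; auto. }
  assert (E2 : ip n (mv n A z) (mv n P z) = ip n z (mv n (mmul n P A) z)).
  { rewrite ip_comm, ip_mv_tr. apply ip_ext; auto. intros k Hk. rewrite mv_mmul.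
    unfold mv, mtr. apply fsum_ext; intros j Hj. rewrite HPsym; auto. }
  assert (E3 : ip n z (mv n (mmul p (mmul n P B) BtP) z) = ip p (mv n BtP z) (mv n BtP z)).
  { rewrite (ip_ext n z z _ (mv p (mmul n P B) (mv n BtP z))) by (auto; intros; apply mv_mmul).
    rewrite ip_comm, ip_mv_tr. apply ip_ext; auto. intros k Hk.
    unfold mv; apply fsum_ext; intros j Hj. f_equal. unfold mtr, BtP, mmul.
    apply fsum_ext; intros l Hl. unfold mtr. rewrite HPsym by auto. ring. }
  rewrite <- E3. unfold qf.
  replace (2 * ip n (mv n A z) (mv n P z))
    with (ip n z (mv n (mmul n P A) z) + ip n z (mv n (mmul n (mtr A) P) z)) by lra.
  unfold ip. rewrite <- fsum_plus, <- fsum_minus. apply fsum_ext; intros i Hi.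
  rewrite <- Rmult_plus_distr_l, <- Rmult_minus_distr_l. f_equal.
  unfold mv. rewrite <- fsum_plus, <- fsum_minus. apply fsum_ext; intros j Hj.
  specialize (HARE i j Hi Hj). unfold BtP. nra.
Qed.

Let K : mat := fun a b => - mmul n (mtr B) P a b.

Lemma ip_input_P_eq_gain v z : ip n (mv p B v) (mv n P z) = - ip p v (mv n K z).
Proof.
  rewrite ip_mv_tr. unfold ip. rewrite <- fsum_opp. apply fsum_ext; intros k Hk.
  rewrite <- mv_mmul. unfold K, mv.
  rewrite (fsum_ext n (fun j => - mmul n (mtr B) P k j * z j)
             (fun j => - (mmul n (mtr B) P k j * z j))), fsum_opp by (intros; ring).
  ring.
Qed.

Lemma riccati_closed_loop_identity z v w :
  2 * ip n (vadd (vadd (mv n A z) (mv p B v)) (mv p B w)) (mv n P z) =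
  ip p (mv n K z) (mv n K z) - qf n Q z - 2 * ip p v (mv n K z) - 2 * ip p w (mv n K z).
Proof.
  assert (HK : forall k, mv n K z k = - mv n (mmul n (mtr B) P) z k)
    by (intros; unfold K, mv; rewrite <- fsum_opp; apply fsum_ext; intros; ring).
  rewrite !ip_add_l, !Rmult_plus_distr_l, riccati_quadratic_identity, !ip_input_P_eq_gain.
  replace (ip p (mv n (mmul n (mtr B) P) z) (mv n (mmul n (mtr B) P) z))
    with (ip p (mv n K z) (mv n K z)) by (unfold ip; apply fsum_ext; intros; rewrite !HK; ring).
  ring.
Qed.

End Riccati.

(** * Minimizing a quadratic form on a sphere *)

Lemma inv_succ_small e : 0 < e -> exists K, forall k, (K <= k)%nat -> / (INR k + 1) < e.
Proof.
  intros He. destruct (RinvN_cv He) as [K HK]. exists K. intros k Hk.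
  specialize (HK k Hk). unfold R_dist in HK. simpl in HK. rewrite Rminus_0_r in HK.
  eapply Rle_lt_trans; [apply Rle_abs | exact HK].
Qed.

Lemma Un_cv_const c : Un_cv (fun _ => c) c.
Proof. intros e He. exists 0%nat. intros. unfold R_dist. rewrite Rminus_diag, Rabs_R0; auto. Qed.

Lemma strict_mono_lt (phi : nat -> nat) : (forall k, (phi k < phi (S k))%nat) ->
  forall a b, (a < b)%nat -> (phi a < phi b)%nat.
Proof. intros H a b Hab. induction Hab; [apply H |]. specialize (H m). lia. Qed.

Lemma strict_mono_ge_id (phi : nat -> nat) : (forall k, (phi k < phi (S k))%nat) ->
  forall k, (k <= phi k)%nat.
Proof. intros H k. induction k; [lia |]. specialize (H k). lia. Qed.

Lemma Un_cv_subseq u l (phi : nat -> nat) : (forall k, (phi k < phi (S k))%nat) ->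
  Un_cv u l -> Un_cv (fun k => u (phi k)) l.
Proof.
  intros Hp Hc e He. destruct (Hc e He) as [K HK]. exists K. intros k Hk.
  apply HK. pose proof (strict_mono_ge_id phi Hp k). lia.
Qed.

Lemma bounded_seq_cv_subseq (u : nat -> R) : (forall k, Rabs (u k) <= 1) ->
  exists phi : nat -> nat, (forall k, (phi k < phi (S k))%nat) /\
    exists l, Un_cv (fun k => u (phi k)) l.
Proof.
  intros Hb.
  destruct (Bolzano_Weierstrass u (fun c => -1 <= c <= 1) (compact_P3 (-1) 1)) as [l Hl].
  { intros k. apply Rabs_le_between, Hb. }
  assert (Hsel : forall K k : nat, exists q, (K <= q)%nat /\ Rabs (u q - l) < / (INR k + 1)).
  { intros K k.
    assert (Hpos : 0 < / (INR k + 1)) by (apply Rinv_0_lt_compat; pose proof (pos_INR k); lra).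
    destruct (Hl (fun y => Rabs (y - l) < / (INR k + 1)) K) as [q Hq].
    - exists (mkposreal _ Hpos). intros y Hy. exact Hy.
    - exists q; exact Hq. }
  set (sel := fun K k => proj1_sig (constructive_indefinite_description _ (Hsel K k))).
  assert (Hsel1 : forall K k, (K <= sel K k)%nat /\ Rabs (u (sel K k) - l) < / (INR k + 1)).
  { intros K k. unfold sel. destruct (constructive_indefinite_description _ (Hsel K k)); auto. }
  set (phi := fix phi k := match k with O => sel O O | S k' => sel (S (phi k')) (S k') end).
  exists phi. split.
  - intros k. simpl. destruct (Hsel1 (S (phi k)) (S k)). lia.
  - exists l. intros e He. destruct (inv_succ_small e He) as [K HK]. exists K. intros k Hk.
    assert (Hk' : Rabs (u (phi k) - l) < / (INR k + 1)).
    { destruct k; simpl; [apply (Hsel1 0%nat 0%nat) | apply (Hsel1 _ (S k))]. }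
    unfold R_dist. eapply Rlt_trans; [exact Hk' | apply HK; auto].
Qed.

Lemma bounded_vec_seq_cv_subseq (N : nat) (u : nat -> vec) :
  (forall k i, (i < N)%nat -> Rabs (u k i) <= 1) ->
  exists phi : nat -> nat, (forall k, (phi k < phi (S k))%nat) /\
    exists l : vec, forall i, (i < N)%nat -> Un_cv (fun k => u (phi k) i) (l i).
Proof.
  induction N; intros Hb.
  - exists (fun k => k). split; [intros; lia |]. exists (fun _ => 0). intros; lia.
  - destruct IHN as [phi [Hphi [l Hl]]]; [intros; apply Hb; lia |].
    destruct (bounded_seq_cv_subseq (fun k => u (phi k) N)) as [psi [Hpsi [lN HlN]]];
      [intros; apply Hb; lia |].
    exists (fun k => phi (psi k)). split.
    + intros k. apply strict_mono_lt; auto.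
    + exists (fun i => if Nat.eqb i N then lN else l i). intros i Hi.
      destruct (Nat.eqb_spec i N).
      * subst. exact HlN.
      * apply (Un_cv_subseq (fun k => u (phi k) i)); auto. apply Hl; lia.
Qed.

Lemma Un_cv_fsum n (g : nat -> nat -> R) (L : nat -> R) :
  (forall i, (i < n)%nat -> Un_cv (fun k => g k i) (L i)) ->
  Un_cv (fun k => fsum n (fun i => g k i)) (fsum n L).
Proof. induction n; intros H; simpl; [apply Un_cv_const | apply CV_plus; auto]. Qed.

Lemma Un_cv_ip n (u v : nat -> vec) (a b : vec) :
  (forall i, (i < n)%nat -> Un_cv (fun k => u k i) (a i)) ->
  (forall i, (i < n)%nat -> Un_cv (fun k => v k i) (b i)) ->
  Un_cv (fun k => ip n (u k) (v k)) (ip n a b).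
Proof.
  intros Hu Hv. apply (Un_cv_fsum n (fun k i => u k i * v k i)).
  intros; apply CV_mult; auto.
Qed.

Lemma Un_cv_mv n M (u : nat -> vec) (a : vec) :
  (forall i, (i < n)%nat -> Un_cv (fun k => u k i) (a i)) ->
  forall j, Un_cv (fun k => mv n M (u k) j) (mv n M a j).
Proof.
  intros Hu j. apply (Un_cv_fsum n (fun k i => M j i * u k i)).
  intros; apply CV_mult; auto. apply Un_cv_const.
Qed.

Lemma Rabs_coord_le_1 n v i : ip n v v = 1 -> (i < n)%nat -> Rabs (v i) <= 1.
Proof.
  intros H Hi.
  assert (v i * v i <= 1).
  { rewrite <- H. apply (fsum_term_le n (fun k => v k * v k)); auto. intros; apply Rle_0_sqr. }
  apply Rabs_le. nra.
Qed.

(* The unit sphere of the hyperplane orthogonal to [c] is compact, so [qf n M] attains its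
   infimum there: a minimizing sequence has a convergent subsequence. *)
Lemma qf_min_exists n M c : (exists v, ip n v v = 1 /\ ip n c v = 0) ->
  exists v, ip n v v = 1 /\ ip n c v = 0 /\
    forall w, ip n w w = 1 -> ip n c w = 0 -> qf n M v <= qf n M w.
Proof.
  intros Hne.
  set (S := fun w => ip n w w = 1 /\ ip n c w = 0).
  set (E := fun r => exists w, S w /\ r = - qf n M w).
  destruct (completeness E) as [m [Hub Hlub]].
  { exists (fsum n (fun i => fsum n (fun j => Rabs (M i j)))).
    intros r [w [[Hw1 Hw2] ->]].
    pose proof (Rabs_le_between _ _ (Rabs_qf_le_entry_bound n M w Hw1)). lra. }
  { destruct Hne as [v Hv]. exists (- qf n M v), v. split; auto. }
  assert (Hlow : forall w, S w -> - m <= qf n M w).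
  { intros w Hw. assert (E (- qf n M w)) by (exists w; auto). apply Hub in H. lra. }
  assert (Hseq : forall k : nat, exists w, S w /\ qf n M w < - m + / (INR k + 1)).
  { intros k. apply NNPP. intros Hno.
    assert (is_upper_bound E (m - / (INR k + 1))).
    { intros r [w [Hw ->]]. apply Rnot_lt_le. intros Hc. apply Hno. exists w. split; auto. lra. }
    apply Hlub in H. pose proof (pos_INR k).
    assert (0 < / (INR k + 1)) by (apply Rinv_0_lt_compat; lra). lra. }
  set (v := fun k => proj1_sig (constructive_indefinite_description _ (Hseq k))).
  assert (Hv : forall k, S (v k) /\ qf n M (v k) < - m + / (INR k + 1)).
  { intros k. unfold v. destruct (constructive_indefinite_description _ (Hseq k)); auto. }
  destruct (bounded_vec_seq_cv_subseq n v) as [phi [Hphi [l Hl]]].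
  { intros k i Hi. apply (Rabs_coord_le_1 n); auto. apply (Hv k). }
  assert (HlS : S l).
  { split.
    - apply (UL_sequence (fun k => ip n (v (phi k)) (v (phi k)))); [apply Un_cv_ip; auto |].
      eapply Un_cv_ext; [| apply Un_cv_const]. intros k; simpl. symmetry; apply (Hv (phi k)).
    - apply (UL_sequence (fun k => ip n c (v (phi k)))).
      + apply Un_cv_ip; auto. intros; apply Un_cv_const.
      + eapply Un_cv_ext; [| apply Un_cv_const]. intros k; simpl. symmetry; apply (Hv (phi k)). }
  assert (Hq : qf n M l = - m).
  { apply (UL_sequence (fun k => qf n M (v (phi k)))).
    - apply Un_cv_ip; auto. intros; apply Un_cv_mv; auto.
    - intros e He. destruct (inv_succ_small e He) as [K HK]. exists K. intros k Hk.
      destruct (Hv (phi k)) as [HS Hlt]. pose proof (Hlow _ HS).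
      assert (/ (INR (phi k) + 1) < e) by (apply HK; pose proof (strict_mono_ge_id phi Hphi k); lia).
      unfold R_dist. rewrite Rabs_right by lra. lra. }
  exists l. destruct HlS as [Hl1 Hl2]. split; [auto | split; [auto |]].
  intros w Hw1 Hw2. rewrite Hq. apply Hlow. split; auto.
Qed.

Lemma qf_ge_min_sq n M c v : ip n v v = 1 ->
  (forall w, ip n w w = 1 -> ip n c w = 0 -> qf n M v <= qf n M w) ->
  forall w, ip n c w = 0 -> qf n M v * ip n w w <= qf n M w.
Proof.
  intros Hv Hmin w Hw. pose proof (ip_nonneg n w).
  destruct (Req_dec (ip n w w) 0) as [Hw0 | Hw0].
  { rewrite Hw0. unfold qf. rewrite (ip_zero_l n w); [lra |]. apply ip_self_eq0; auto. }
  set (c' := / sqrt (ip n w w)).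
  assert (Hsq : sqrt (ip n w w) * sqrt (ip n w w) = ip n w w) by (apply sqrt_sqrt; lra).
  assert (0 < sqrt (ip n w w)) by (apply sqrt_lt_R0; lra).
  assert (Hcc : c' * c' * ip n w w = 1) by (unfold c'; rewrite <- Hsq at 3; field; lra).
  specialize (Hmin (vscale c' w)).
  rewrite ip_scale_l, !ip_scale_r, qf_scale, Hw in Hmin.
  specialize (Hmin ltac:(lra) ltac:(lra)).
  assert (0 < c' * c') by (unfold c'; apply Rmult_lt_0_compat; apply Rinv_0_lt_compat; lra).
  apply Rmult_le_reg_l with (c' * c'); auto.
  replace (c' * c' * (qf n M v * ip n w w)) with (qf n M v * (c' * c' * ip n w w)) by ring.
  rewrite Hcc. lra.
Qed.

Lemma posdef_coercive n M : posdef n M -> exists q, 0 < q /\ forall v, q * ip n v v <= qf n M v.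
Proof.
  intros Hpd. destruct n as [| n'].
  { exists 1. split; [lra |]. intros v. unfold qf, ip. simpl. lra. }
  destruct (qf_min_exists (S n') M (fun _ => 0)) as [v [Hv1 [_ Hmin]]].
  { exists (fun k => if Nat.eqb k 0 then 1 else 0). split.
    - unfold ip. rewrite (fsum_single (S n') _ 0%nat) by (lia || (intros k Hk Hk0;
        destruct (Nat.eqb_spec k 0); [lia | ring])). simpl; ring.
    - apply ip_zero_l; auto. }
  exists (qf (S n') M v). split.
  - apply Hpd. apply NNPP. intros Hno.
    assert (ip (S n') v v = 0).
    { apply ip_zero_l. intros k Hk. apply NNPP. intros Hk'. apply Hno. exists k; auto. }
    lra.
  - intros w. apply (qf_ge_min_sq _ _ (fun _ => 0)); auto.
    apply ip_zero_l; auto.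
Qed.

Lemma linear_quadratic_nonneg_eq0 c D : 0 <= D ->
  (forall s, 0 <= 2 * s * c + s * s * D) -> c = 0.
Proof.
  intros HD H. specialize (H (- c / (D + 1))).
  replace (2 * (- c / (D + 1)) * c + - c / (D + 1) * (- c / (D + 1)) * D)
    with (c * c * (- D - 2) / ((D + 1) * (D + 1))) in H by (field; lra).
  assert (0 < (D + 1) * (D + 1)) by nra.
  assert (0 <= c * c * (- D - 2)).
  { apply Rmult_le_reg_r with (/ ((D + 1) * (D + 1))); [apply Rinv_0_lt_compat; auto |].
    rewrite Rmult_0_l. exact H. }
  nra.
Qed.

(* A minimizer [v] of a symmetric form on the sphere of [c]-orthogonal vectors is an eigenvector,
   provided [M] maps into that hyperplane: perturbing [v] along [M v - mu v] cannot lower the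
   Rayleigh quotient. *)
Lemma qf_minimizer_eigenvector n M c v : symmetric n M ->
  (forall z, ip n c (mv n M z) = 0) -> ip n v v = 1 -> ip n c v = 0 ->
  (forall w, ip n w w = 1 -> ip n c w = 0 -> qf n M v <= qf n M w) ->
  forall i, (i < n)%nat -> mv n M v i = qf n M v * v i.
Proof.
  intros HM Hc Hv1 Hv2 Hmin.
  set (mu := qf n M v).
  assert (Hge := qf_ge_min_sq n M c v Hv1 Hmin). fold mu in Hge.
  set (w := vsub (mv n M v) (vscale mu v)).
  assert (Hw : ip n c w = 0) by (unfold w; rewrite ip_sub_r, ip_scale_r, Hc, Hv2; ring).
  set (c0 := ip n w w).
  assert (Hc0 : c0 = 0).
  { apply (linear_quadratic_nonneg_eq0 c0 (qf n M w - mu * c0)).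
    - unfold c0; pose proof (Hge w Hw); lra.
    - intros s. set (x := vadd v (vscale s w)).
      assert (Hx : ip n c x = 0) by (unfold x; rewrite ip_add_r, ip_scale_r, Hv2, Hw; ring).
      assert (E1 : ip n x x = 1 + 2 * s * ip n w v + s * s * c0).
      { unfold x, c0. rewrite !ip_add_l, !ip_add_r, !ip_scale_l, !ip_scale_r, Hv1, (ip_comm n v w).
        ring. }
      assert (E2 : qf n M x = mu + 2 * s * ip n w (mv n M v) + s * s * qf n M w).
      { unfold qf at 1, x.
        rewrite (ip_ext n _ (vadd v (vscale s w)) _ (vadd (mv n M v) (vscale s (mv n M w))))
          by (auto; intros; rewrite mv_add, mv_scale; reflexivity).
        rewrite !ip_add_l, !ip_add_r, !ip_scale_l, !ip_scale_r, (ip_mv_symmetric n M v w HM).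
        unfold mu, qf. ring. }
      assert (E3 : ip n w (mv n M v) = c0 + mu * ip n w v)
        by (unfold c0, w; rewrite !ip_sub_l, !ip_sub_r, !ip_scale_l, !ip_scale_r; ring).
      pose proof (Hge x Hx) as Hxx. rewrite E1, E2, E3 in Hxx. lra. }
  intros i Hi. pose proof (ip_self_eq0 n w Hc0 i Hi) as Hwi.
  unfold w, vsub, vscale in Hwi. lra.
Qed.

(** * Differential inequalities on [t0, +oo) *)

(* Extending [g] affinely to the left of [t0] turns the one-sided derivative at [t0] into a
   two-sided one, so that the derivative calculus of the standard library applies. *)
Definition affine_extension (t0 : R) (g g' : R -> R) : R -> R :=
  fun t => if Rle_dec t0 t then g t else g t0 + g' t0 * (t - t0).

Lemma affine_extension_eq t0 g g' t : t0 <= t -> affine_extension t0 g g' t = g t.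
Proof. intros H; unfold affine_extension; destruct (Rle_dec t0 t); [auto | lra]. Qed.

Lemma derivable_pt_lim_affine_extension t0 g g' : deriv_on t0 g g' ->
  forall t, t0 <= t -> derivable_pt_lim (affine_extension t0 g g') t (g' t).
Proof.
  intros Hd t Ht eps Heps. destruct (Hd t Ht eps Heps) as [d [Hd0 Hd1]].
  destruct (Rle_lt_or_eq_dec _ _ Ht) as [Hlt | Heq].
  - assert (Hpos : 0 < Rmin d (t - t0)) by (apply Rmin_glb_lt; lra).
    exists (mkposreal _ Hpos). intros h Hh Hha. simpl in Hha.
    assert (Habs1 : Rabs h < d) by (eapply Rlt_le_trans; [exact Hha | apply Rmin_l]).
    assert (Habs2 : Rabs h < t - t0) by (eapply Rlt_le_trans; [exact Hha | apply Rmin_r]).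
    assert (t0 <= t + h) by (pose proof (Rle_abs (- h)); rewrite Rabs_Ropp in H; lra).
    rewrite !affine_extension_eq by lra. apply Hd1; auto.
  - subst t. exists (mkposreal _ Hd0). intros h Hh Hha. simpl in Hha.
    unfold affine_extension. destruct (Rle_dec t0 t0); [| lra].
    destruct (Rle_dec t0 (t0 + h)); [apply Hd1; auto |].
    replace ((g t0 + g' t0 * (t0 + h - t0) - g t0) / h - g' t0) with 0 by (field; auto).
    rewrite Rabs_R0; auto.
Qed.

Lemma deriv_on_of_derivable_pt_lim t0 G g g' :
  (forall t, t0 <= t -> derivable_pt_lim G t (g' t)) ->
  (forall t, t0 <= t -> G t = g t) -> deriv_on t0 g g'.
Proof.
  intros Hd HG t Ht eps Heps. destruct (Hd t Ht eps Heps) as [d Hd1].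
  exists d. split; [apply cond_pos |]. intros h Hh Hha Hth.
  rewrite <- !HG by auto. apply Hd1; auto.
Qed.

Lemma deriv_on_ext t0 g1 g2 d1 d2 : deriv_on t0 g1 d1 ->
  (forall t, t0 <= t -> g1 t = g2 t) -> (forall t, t0 <= t -> d1 t = d2 t) -> deriv_on t0 g2 d2.
Proof.
  intros Hd Hg Hdd. apply deriv_on_of_derivable_pt_lim with (affine_extension t0 g1 d1).
  - intros t Ht. rewrite <- Hdd by auto. apply derivable_pt_lim_affine_extension; auto.
  - intros t Ht. rewrite affine_extension_eq by auto. auto.
Qed.

Lemma deriv_on_plus t0 g h dg dh : deriv_on t0 g dg -> deriv_on t0 h dh ->
  deriv_on t0 (fun t => g t + h t) (fun t => dg t + dh t).
Proof.
  intros Hg Hh.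
  apply deriv_on_of_derivable_pt_lim with (affine_extension t0 g dg + affine_extension t0 h dh)%F.
  - intros t Ht. apply derivable_pt_lim_plus; apply derivable_pt_lim_affine_extension; auto.
  - intros t Ht. unfold plus_fct. rewrite !affine_extension_eq; auto.
Qed.

Lemma deriv_on_minus t0 g h dg dh : deriv_on t0 g dg -> deriv_on t0 h dh ->
  deriv_on t0 (fun t => g t - h t) (fun t => dg t - dh t).
Proof.
  intros Hg Hh.
  apply deriv_on_of_derivable_pt_lim with (affine_extension t0 g dg - affine_extension t0 h dh)%F.
  - intros t Ht. apply derivable_pt_lim_minus; apply derivable_pt_lim_affine_extension; auto.
  - intros t Ht. unfold minus_fct. rewrite !affine_extension_eq; auto.
Qed.

Lemma deriv_on_mult t0 g h dg dh : deriv_on t0 g dg -> deriv_on t0 h dh ->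
  deriv_on t0 (fun t => g t * h t) (fun t => dg t * h t + g t * dh t).
Proof.
  intros Hg Hh.
  apply deriv_on_of_derivable_pt_lim with (affine_extension t0 g dg * affine_extension t0 h dh)%F.
  - intros t Ht.
    rewrite <- (affine_extension_eq t0 g dg t), <- (affine_extension_eq t0 h dh t) by auto.
    apply derivable_pt_lim_mult; apply derivable_pt_lim_affine_extension; auto.
  - intros t Ht. unfold mult_fct. rewrite !affine_extension_eq; auto.
Qed.

Lemma deriv_on_const t0 c : deriv_on t0 (fun _ => c) (fun _ => 0).
Proof.
  apply deriv_on_of_derivable_pt_lim with (fct_cte c); auto.
  intros; apply derivable_pt_lim_const.
Qed.

Lemma deriv_on_scal t0 c g dg : deriv_on t0 g dg ->
  deriv_on t0 (fun t => c * g t) (fun t => c * dg t).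
Proof.
  intros Hg. eapply deriv_on_ext; [apply deriv_on_mult; [apply deriv_on_const | exact Hg] | |].
  - intros; reflexivity.
  - intros; simpl; ring.
Qed.

Lemma deriv_on_fsum t0 n (g dg : nat -> R -> R) :
  (forall i, (i < n)%nat -> deriv_on t0 (g i) (dg i)) ->
  deriv_on t0 (fun t => fsum n (fun i => g i t)) (fun t => fsum n (fun i => dg i t)).
Proof.
  induction n; intros H; simpl; [apply deriv_on_const | apply deriv_on_plus; auto].
Qed.

Lemma deriv_on_exp_lin t0 c : deriv_on t0 (fun t => exp (c * t)) (fun t => c * exp (c * t)).
Proof.
  apply deriv_on_of_derivable_pt_lim with (comp exp (fct_cte c * id)%F).
  - intros t Ht.
    replace (c * exp (c * t))
      with (exp ((fct_cte c * id)%F t) * (0 * id t + fct_cte c t * 1))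
      by (unfold mult_fct, fct_cte, id; ring).
    apply derivable_pt_lim_comp; [| apply derivable_pt_lim_exp].
    apply derivable_pt_lim_mult; [apply derivable_pt_lim_const | apply derivable_pt_lim_id].
  - intros; unfold comp, mult_fct, fct_cte, id; auto.
Qed.

Lemma deriv_on_nonincreasing t0 g dg : deriv_on t0 g dg -> (forall t, t0 <= t -> dg t <= 0) ->
  forall a b, t0 <= a -> a <= b -> g b <= g a.
Proof.
  intros Hd Hneg a b Ha Hab.
  destruct (Rle_lt_or_eq_dec _ _ Hab) as [Hlt | Heq]; [| subst; lra].
  set (G := affine_extension t0 g dg).
  assert (HD : forall t, t0 <= t -> derivable_pt_lim G t (dg t))
    by (apply derivable_pt_lim_affine_extension; auto).
  destruct (Derive.MVT_gen G a b dg) as [c [[Hc1 Hc2] Hc]].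
  - intros x [Hx1 Hx2]. apply Derive.is_derive_Reals. apply HD.
    rewrite Rmin_left in Hx1 by lra. lra.
  - intros x [Hx1 Hx2]. rewrite Rmin_left in Hx1 by lra.
    apply derivable_continuous_pt. exists (dg x). apply HD. lra.
  - rewrite Rmin_left in Hc1 by lra.
    unfold G in Hc. rewrite !affine_extension_eq in Hc by lra.
    assert (dg c <= 0) by (apply Hneg; lra). nra.
Qed.

Lemma exp_decay_small g C eps : 0 < g -> 0 <= C -> 0 < eps ->
  exists T, forall t, T <= t -> C * exp (- g * t) < eps.
Proof.
  intros Hg HC He. exists (ln ((C + 1) / eps) / g). intros t Ht.
  assert (Hq : 0 < (C + 1) / eps) by (apply Rdiv_lt_0_compat; lra).
  assert (H1 : exp (- g * t) <= eps / (C + 1)).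
  { replace (eps / (C + 1)) with (exp (- ln ((C + 1) / eps)))
      by (rewrite exp_Ropp, exp_ln by auto; field; lra).
    assert (Hle : - g * t <= - ln ((C + 1) / eps)).
    { apply Rmult_le_compat_l with (r := g) in Ht; [| lra].
      replace (g * (ln ((C + 1) / eps) / g)) with (ln ((C + 1) / eps)) in Ht by (field; lra).
      lra. }
    destruct (Rle_lt_or_eq_dec _ _ Hle) as [Hlt | ->]; [left; apply exp_increasing; auto | lra]. }
  assert (C * exp (- g * t) <= C * (eps / (C + 1))) by (apply Rmult_le_compat_l; lra).
  assert (C * (eps / (C + 1)) < eps).
  { apply Rmult_lt_reg_r with (C + 1); [lra |].
    replace (C * (eps / (C + 1)) * (C + 1)) with (C * eps) by (field; lra). nra. }
  lra.
Qed.

(* With [0 < g < min alpha phi], the function [e^(g t) V t + k e^((g - phi) t)] is nonincreasing,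
   hence [V t = O(e^(-g t))]. *)
Lemma differential_inequality_tends_to_0 t0 V dV alpha beta phi : deriv_on t0 V dV ->
  (forall t, t0 <= t -> 0 <= V t) ->
  (forall t, t0 <= t -> dV t <= - alpha * V t + beta * exp (- phi * t)) ->
  0 < alpha -> 0 < phi -> 0 <= beta -> tends_to_0 V.
Proof.
  intros Hd Hpos Hb Ha Hp Hbeta.
  set (g := Rmin alpha phi / 2).
  assert (Hg0 : 0 < g) by (unfold g; assert (0 < Rmin alpha phi) by (apply Rmin_glb_lt; lra); lra).
  assert (Hga : g < alpha) by (unfold g; pose proof (Rmin_l alpha phi); lra).
  assert (Hgp : g < phi) by (unfold g; pose proof (Rmin_r alpha phi); lra).
  set (k := beta / (phi - g)).
  assert (Hk : 0 <= k) by (unfold k; apply Rmult_le_pos; [lra | left; apply Rinv_0_lt_compat; lra]).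
  set (G := fun t => exp (g * t) * V t + k * exp ((g - phi) * t)).
  assert (HG : deriv_on t0 G (fun t => (g * exp (g * t) * V t + exp (g * t) * dV t)
                                        + k * ((g - phi) * exp ((g - phi) * t)))).
  { apply deriv_on_plus; [apply deriv_on_mult; [apply deriv_on_exp_lin | auto] |].
    apply deriv_on_scal, deriv_on_exp_lin. }
  assert (Hmono : forall t, t0 <= t -> G t <= G t0).
  { intros t Ht. apply (deriv_on_nonincreasing _ _ _ HG); auto; [| lra].
    intros s Hs. specialize (Hb s Hs). specialize (Hpos s Hs).
    replace (exp ((g - phi) * s)) with (exp (g * s) * exp (- phi * s))
      by (rewrite <- exp_plus; f_equal; ring).
    unfold k.
    assert (0 < exp (g * s)) by apply exp_pos.
    replace (g * exp (g * s) * V s + exp (g * s) * dV s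
             + beta / (phi - g) * ((g - phi) * (exp (g * s) * exp (- phi * s))))
      with (exp (g * s) * (g * V s + dV s - beta * exp (- phi * s))) by (field; lra).
    assert (g * V s + dV s - beta * exp (- phi * s) <= 0) by nra.
    nra. }
  intros eps He.
  assert (HC : 0 <= G t0).
  { unfold G. pose proof (exp_pos (g * t0)). pose proof (exp_pos ((g - phi) * t0)).
    specialize (Hpos t0 (Rle_refl _)). nra. }
  destruct (exp_decay_small g (G t0) eps Hg0 HC He) as [T HT].
  exists (Rmax T t0). intros t Ht.
  assert (HtT : T <= t) by (eapply Rle_trans; [apply Rmax_l | exact Ht]).
  assert (Ht0 : t0 <= t) by (eapply Rle_trans; [apply Rmax_r | exact Ht]).
  specialize (HT t HtT). specialize (Hmono t Ht0). specialize (Hpos t Ht0).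
  rewrite Rabs_right by lra.
  assert (exp (g * t) * V t <= G t0).
  { pose proof (exp_pos ((g - phi) * t)). unfold G in *. nra. }
  assert (V t = (exp (g * t) * V t) * exp (- g * t)).
  { rewrite Rmult_assoc, (Rmult_comm (V t)), <- Rmult_assoc, <- exp_plus.
    replace (g * t + - g * t) with 0 by ring. rewrite exp_0; ring. }
  pose proof (exp_pos (- g * t)). nra.
Qed.

Lemma deriv_on_linear_bound_eq0 t0 W dW a : deriv_on t0 W dW ->
  (forall t, t0 <= t -> 0 <= W t) -> (forall t, t0 <= t -> dW t <= a * W t) ->
  W t0 = 0 -> forall t, t0 <= t -> W t = 0.
Proof.
  intros Hd Hpos Hb H0 t Ht.
  assert (HG : deriv_on t0 (fun t => exp (- a * t) * W t)
                 (fun t => - a * exp (- a * t) * W t + exp (- a * t) * dW t))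
    by (apply deriv_on_mult; [apply deriv_on_exp_lin | auto]).
  assert (exp (- a * t) * W t <= exp (- a * t0) * W t0).
  { apply (deriv_on_nonincreasing _ _ _ HG); auto; [| lra].
    intros s Hs. specialize (Hb s Hs). pose proof (exp_pos (- a * s)). nra. }
  rewrite H0 in H. pose proof (exp_pos (- a * t)). specialize (Hpos t Ht). nra.
Qed.

Lemma deriv_on_qf t0 n P z dz : symmetric n P -> vderiv_on t0 n z dz ->
  deriv_on t0 (fun t => qf n P (z t)) (fun t => 2 * ip n (dz t) (mv n P (z t))).
Proof.
  intros HP Hz.
  apply (deriv_on_ext t0 (fun t => fsum n (fun a => z t a * mv n P (z t) a)) _
           (fun t => fsum n (fun a => dz t a * mv n P (z t) a + z t a * mv n P (dz t) a))).
  - apply (deriv_on_fsum t0 n (fun a t => z t a * mv n P (z t) a)). intros a Ha.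
    apply deriv_on_mult; [apply Hz; auto |].
    apply (deriv_on_fsum t0 n (fun b t => P a b * z t b)). intros b Hb.
    apply deriv_on_scal, Hz; auto.
  - reflexivity.
  - intros t Ht. rewrite fsum_plus.
    fold (ip n (dz t) (mv n P (z t))) (ip n (z t) (mv n P (dz t))).
    rewrite ip_mv_symmetric by auto. ring.
Qed.

Lemma linear_ode_zero t0 n A z : vderiv_on t0 n z (fun t => mv n A (z t)) ->
  (forall k, (k < n)%nat -> z t0 k = 0) ->
  forall t k, t0 <= t -> (k < n)%nat -> z t k = 0.
Proof.
  intros Hz H0 t k Ht Hk. apply (ip_self_eq0 n (z t)); auto.
  set (a := fsum n (fun i => fsum n (fun j => Rabs (A i j)))).
  apply (deriv_on_linear_bound_eq0 t0 (fun t => ip n (z t) (z t))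
           (fun t => 2 * qf n A (z t)) (2 * a)); auto.
  - apply (deriv_on_ext t0 (fun t => fsum n (fun k => z t k * z t k)) _
             (fun t => fsum n (fun k => mv n A (z t) k * z t k + z t k * mv n A (z t) k))).
    + apply (deriv_on_fsum t0 n (fun k t => z t k * z t k)).
      intros; apply deriv_on_mult; apply Hz; auto.
    + reflexivity.
    + intros s Hs. unfold qf, ip. rewrite <- fsum_scal. apply fsum_ext; intros; ring.
  - intros; apply ip_nonneg.
  - intros s Hs. pose proof (qf_le_entry_bound n A (z s)). fold a in H. lra.
  - apply ip_zero_l; auto.
Qed.

Lemma vderiv_on_ext t0 n x dx dy : vderiv_on t0 n x dx ->
  (forall t k, t0 <= t -> (k < n)%nat -> dx t k = dy t k) -> vderiv_on t0 n x dy.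
Proof. intros Hx H k Hk. apply (deriv_on_ext t0 _ _ _ _ (Hx k Hk)); auto. Qed.

Lemma vderiv_on_add t0 n x y dx dy : vderiv_on t0 n x dx -> vderiv_on t0 n y dy ->
  vderiv_on t0 n (fun t => vadd (x t) (y t)) (fun t => vadd (dx t) (dy t)).
Proof. intros Hx Hy k Hk. apply deriv_on_plus; auto. Qed.

Lemma vderiv_on_sub t0 n x y dx dy : vderiv_on t0 n x dx -> vderiv_on t0 n y dy ->
  vderiv_on t0 n (fun t => vsub (x t) (y t)) (fun t => vsub (dx t) (dy t)).
Proof. intros Hx Hy k Hk. apply deriv_on_minus; auto. Qed.

Lemma vderiv_on_scale t0 n c x dx : vderiv_on t0 n x dx ->
  vderiv_on t0 n (fun t => vscale c (x t)) (fun t => vscale c (dx t)).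
Proof. intros Hx k Hk. apply deriv_on_scal; auto. Qed.

Lemma vderiv_on_vsum t0 n N (x dx : nat -> R -> vec) :
  (forall i, (i < N)%nat -> vderiv_on t0 n (x i) (dx i)) ->
  vderiv_on t0 n (fun t => vsum N (fun i => x i t)) (fun t => vsum N (fun i => dx i t)).
Proof. intros Hx k Hk. apply (deriv_on_fsum t0 N (fun i t => x i t k)). intros; apply Hx; auto. Qed.

Lemma tends_to_0_vnorm_of_qf_sum N n P (z : nat -> R -> vec) : posdef n P ->
  tends_to_0 (fun t => fsum N (fun i => qf n P (z i t))) ->
  forall i, (i < N)%nat -> tends_to_0 (fun t => vnorm n (z i t)).
Proof.
  intros HP HV i Hi eps He.
  destruct (posdef_coercive n P HP) as [q [Hq HqP]].
  assert (Hpos : 0 < q * (eps * eps)) by (repeat apply Rmult_lt_0_compat; auto).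
  destruct (HV _ Hpos) as [T HT].
  exists T. intros t Ht. specialize (HT t Ht).
  assert (Hle : q * ip n (z i t) (z i t) <= fsum N (fun j => qf n P (z j t))).
  { eapply Rle_trans; [apply HqP |]. apply (fsum_term_le N (fun j => qf n P (z j t))); auto.
    intros j Hj. pose proof (HqP (z j t)). pose proof (ip_nonneg n (z j t)). nra. }
  pose proof (vnorm_sq n (z i t)) as Hsq. pose proof (vnorm_nonneg n (z i t)).
  pose proof (ip_nonneg n (z i t)).
  rewrite Rabs_right in HT by nra. rewrite Rabs_right by lra.
  assert (vnorm n (z i t) * vnorm n (z i t) < eps * eps)
    by (apply Rmult_lt_reg_l with q; auto; rewrite Hsq; lra).
  nra.
Qed.

(** * Graph Laplacians *)

Definition adjacency (adj : nat -> nat -> bool) (i j : nat) : R := if adj i j then 1 else 0.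

(* [edge_sum N adj G] sums [G i j] over all ordered pairs of neighbours, i.e. twice over each edge. *)
Definition edge_sum (N : nat) (adj : nat -> nat -> bool) (G : nat -> nat -> R) : R :=
  fsum N (fun i => fsum N (fun j => adjacency adj i j * G i j)).

Lemma adjacency_nonneg adj i j : 0 <= adjacency adj i j.
Proof. unfold adjacency; destruct (adj i j); lra. Qed.

Lemma edge_sum_ext N adj G G' : (forall i j, (i < N)%nat -> (j < N)%nat -> G i j = G' i j) ->
  edge_sum N adj G = edge_sum N adj G'.
Proof. intros H. apply fsum_ext; intros; apply fsum_ext; intros; rewrite H; auto. Qed.

Lemma edge_sum_le N adj G G' : (forall i j, (i < N)%nat -> (j < N)%nat -> G i j <= G' i j) ->
  edge_sum N adj G <= edge_sum N adj G'.
Proof.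
  intros H. apply fsum_le; intros; apply fsum_le; intros.
  apply Rmult_le_compat_l; [apply adjacency_nonneg | auto].
Qed.

Lemma edge_sum_nonneg N adj G : (forall i j, (i < N)%nat -> (j < N)%nat -> 0 <= G i j) ->
  0 <= edge_sum N adj G.
Proof.
  intros H. apply fsum_nonneg; intros; apply fsum_nonneg; intros.
  apply Rmult_le_pos; [apply adjacency_nonneg | auto].
Qed.

Lemma edge_sum_plus N adj G G' :
  edge_sum N adj (fun i j => G i j + G' i j) = edge_sum N adj G + edge_sum N adj G'.
Proof.
  unfold edge_sum. rewrite <- fsum_plus. apply fsum_ext; intros.
  rewrite <- fsum_plus. apply fsum_ext; intros; ring.
Qed.

Lemma edge_sum_minus N adj G G' :
  edge_sum N adj (fun i j => G i j - G' i j) = edge_sum N adj G - edge_sum N adj G'.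
Proof.
  unfold edge_sum. rewrite <- fsum_minus. apply fsum_ext; intros.
  rewrite <- fsum_minus. apply fsum_ext; intros; ring.
Qed.

Lemma edge_sum_scal N adj c G : edge_sum N adj (fun i j => c * G i j) = c * edge_sum N adj G.
Proof.
  unfold edge_sum. rewrite <- fsum_scal. apply fsum_ext; intros.
  rewrite <- fsum_scal. apply fsum_ext; intros; ring.
Qed.

Lemma edge_sum_transpose N adj G : simple_undirected N adj ->
  edge_sum N adj (fun i j => G j i) = edge_sum N adj G.
Proof.
  intros [Hs _]. unfold edge_sum. rewrite fsum_swap.
  apply fsum_ext; intros i Hi; apply fsum_ext; intros j Hj.
  unfold adjacency. rewrite Hs by auto. reflexivity.
Qed.

Lemma edge_sum_antisym N adj G : simple_undirected N adj ->
  (forall i j, (i < N)%nat -> (j < N)%nat -> G j i = - G i j) -> edge_sum N adj G = 0.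
Proof.
  intros Hs HG. pose proof (edge_sum_transpose N adj G Hs) as H.
  rewrite (edge_sum_ext N adj _ (fun i j => -1 * G i j)) in H by (intros; rewrite HG; auto; ring).
  rewrite edge_sum_scal in H. lra.
Qed.

Lemma edge_sum_antisym_ip N p adj (g : nat -> nat -> vec) (y : nat -> vec) :
  simple_undirected N adj ->
  (forall i j k, (i < N)%nat -> (j < N)%nat -> (k < p)%nat -> g j i k = - g i j k) ->
  edge_sum N adj (fun i j => ip p (g i j) (y i)) =
  / 2 * edge_sum N adj (fun i j => ip p (g i j) (vsub (y i) (y j))).
Proof.
  intros Hs Hg.
  assert (H : edge_sum N adj (fun i j => ip p (g i j) (y j)) =
              - edge_sum N adj (fun i j => ip p (g i j) (y i))).
  { rewrite <- (edge_sum_transpose N adj (fun i j => ip p (g i j) (y j)) Hs).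
    replace (- edge_sum N adj (fun i j => ip p (g i j) (y i)))
      with (edge_sum N adj (fun i j => -1 * ip p (g i j) (y i))) by (rewrite edge_sum_scal; ring).
    apply edge_sum_ext; intros i j Hi Hj. unfold ip.
    rewrite <- fsum_scal. apply fsum_ext; intros k Hk. rewrite Hg by auto. ring. }
  rewrite (edge_sum_ext N adj (fun i j => ip p (g i j) (vsub (y i) (y j)))
             (fun i j => ip p (g i j) (y i) - ip p (g i j) (y j))) by (intros; apply ip_sub_r).
  rewrite edge_sum_minus, H. field.
Qed.

Lemma nbsum_coord N adj i g k : nbsum N adj i g k = fsum N (fun j => adjacency adj i j * g j k).
Proof. unfold nbsum, vsum. apply fsum_ext; intros j Hj. unfold adjacency. destruct (adj i j); ring. Qed.

Lemma ip_nbsum p N adj i g y :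
  ip p (nbsum N adj i g) y = fsum N (fun j => adjacency adj i j * ip p (g j) y).
Proof.
  unfold ip. rewrite (fsum_ext p _ (fun k => fsum N (fun j => adjacency adj i j * g j k * y k)))
    by (intros; rewrite nbsum_coord, <- fsum_scal_r; reflexivity).
  rewrite fsum_swap. apply fsum_ext; intros j Hj.
  rewrite <- fsum_scal. apply fsum_ext; intros; ring.
Qed.

Lemma laplacian_mv N adj z i : (i < N)%nat ->
  mv N (laplacian N adj) z i = fsum N (fun j => adjacency adj i j * (z i - z j)).
Proof.
  intros Hi. unfold mv, laplacian.
  rewrite (fsum_ext N _ (fun j => (if Nat.eqb i j then degree N adj i * z j else 0)
                                   - adjacency adj i j * z j))
    by (intros j Hj; unfold adjacency; destruct (Nat.eqb i j); ring).
  rewrite fsum_minus, (fsum_single N _ i Hi)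
    by (intros k Hk Hki; destruct (Nat.eqb_spec i k); [lia | auto]).
  rewrite Nat.eqb_refl.
  replace (degree N adj i) with (fsum N (fun j => adjacency adj i j)) by reflexivity.
  rewrite <- fsum_scal_r, <- fsum_minus. apply fsum_ext; intros; ring.
Qed.

Lemma laplacian_qf N adj z : simple_undirected N adj ->
  qf N (laplacian N adj) z = / 2 * edge_sum N adj (fun i j => (z i - z j) * (z i - z j)).
Proof.
  intros Hs.
  assert (E : qf N (laplacian N adj) z = edge_sum N adj (fun i j => z i * z i - z i * z j)).
  { unfold qf, ip, edge_sum. apply fsum_ext; intros i Hi. rewrite laplacian_mv by auto.
    rewrite <- fsum_scal. apply fsum_ext; intros; ring. }
  rewrite (edge_sum_ext N adj _ (fun i j => (z i * z i - z i * z j) + (z j * z j - z j * z i)))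
    by (intros; ring).
  rewrite edge_sum_plus, (edge_sum_transpose N adj (fun i j => z i * z i - z i * z j) Hs), <- E.
  field.
Qed.

Lemma laplacian_sum N adj z : simple_undirected N adj -> fsum N (mv N (laplacian N adj) z) = 0.
Proof.
  intros Hs. rewrite (fsum_ext N _ (fun i => fsum N (fun j => adjacency adj i j * (z i - z j))))
    by (intros; apply laplacian_mv; auto).
  apply (edge_sum_antisym N adj (fun i j => z i - z j) Hs). intros; ring.
Qed.

Lemma laplacian_symmetric N adj : simple_undirected N adj -> symmetric N (laplacian N adj).
Proof.
  intros [Hs _] i j Hi Hj. unfold laplacian. rewrite Hs by auto.
  destruct (Nat.eqb_spec i j), (Nat.eqb_spec j i); subst; try lia; auto.
Qed.

Lemma connected_const N adj (v : vec) : connected N adj ->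
  (forall i j, (i < N)%nat -> (j < N)%nat -> adj i j = true -> v i = v j) ->
  forall i j, (i < N)%nat -> (j < N)%nat -> v i = v j.
Proof.
  intros Hc H i j Hi Hj.
  assert (G : forall x y, clos_refl_trans nat (edge N adj) x y -> v x = v y).
  { intros x y Hxy. induction Hxy as [x y [? [? ?]] | | ]; auto; congruence. }
  apply G, Hc; auto.
Qed.

Lemma laplacian_qf_eq0_const N adj z : simple_undirected N adj -> connected N adj ->
  qf N (laplacian N adj) z = 0 -> forall i j, (i < N)%nat -> (j < N)%nat -> z i = z j.
Proof.
  intros Hs Hc Hq. apply (connected_const N adj z Hc). intros i j Hi Hj Ha.
  rewrite laplacian_qf in Hq by auto.
  assert (Hsum : edge_sum N adj (fun i j => (z i - z j) * (z i - z j)) = 0) by lra.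
  assert (Hrow := fsum_nonneg_eq0 N _
    (fun i _ => fsum_nonneg _ _ (fun j _ => Rmult_le_pos _ _ (adjacency_nonneg adj i j)
                                               (Rle_0_sqr (z i - z j)))) Hsum i Hi).
  assert (Hij := fsum_nonneg_eq0 N _
    (fun j _ => Rmult_le_pos _ _ (adjacency_nonneg adj i j) (Rle_0_sqr (z i - z j))) Hrow j Hj).
  simpl in Hij. unfold adjacency in Hij. rewrite Ha, Rmult_1_l in Hij.
  apply Rsqr_0_uniq in Hij. lra.
Qed.

Lemma smallest_nonzero_eigenvalue_dim_pos N M lam :
  smallest_nonzero_eigenvalue N M lam -> (0 < N)%nat.
Proof. intros [[v [[k [Hk _]] _]] _]. lia. Qed.

Lemma lambda2_pos N adj lam2 : simple_undirected N adj ->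
  smallest_nonzero_eigenvalue N (laplacian N adj) lam2 -> 0 < lam2.
Proof.
  intros Hs [[v [Hnz Hev]] [Hne _]].
  assert (qf N (laplacian N adj) v = lam2 * ip N v v).
  { unfold qf, ip. rewrite <- fsum_scal. apply fsum_ext; intros. rewrite Hev by auto. ring. }
  assert (0 <= qf N (laplacian N adj) v).
  { rewrite laplacian_qf by auto. apply Rmult_le_pos; [lra |].
    apply edge_sum_nonneg; intros; apply Rle_0_sqr. }
  pose proof (ip_self_pos N v Hnz). assert (0 <= lam2) by nra. lra.
Qed.

(* The Rayleigh quotient of the Laplacian on the complement of the constants is minimised by an
   eigenvector, whose eigenvalue is nonzero by connectedness. *)
Lemma fiedler_bound N adj lam2 z : simple_undirected N adj -> connected N adj ->
  smallest_nonzero_eigenvalue N (laplacian N adj) lam2 -> fsum N z = 0 ->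
  lam2 * ip N z z <= qf N (laplacian N adj) z.
Proof.
  intros Hs Hc Hl Hz. set (L := laplacian N adj). set (ones := (fun _ => 1) : vec).
  assert (Hones : forall w, ip N ones w = fsum N w)
    by (intros; unfold ip, ones; apply fsum_ext; intros; ring).
  destruct (Req_dec (ip N z z) 0) as [H0 | H0].
  { rewrite H0, Rmult_0_r. unfold L. rewrite laplacian_qf by auto.
    apply Rmult_le_pos; [lra | apply edge_sum_nonneg; intros; apply Rle_0_sqr]. }
  pose proof (ip_nonneg N z).
  destruct (qf_min_exists N L ones) as [v [Hv1 [Hv2 Hmin]]].
  { exists (vscale (/ sqrt (ip N z z)) z). split.
    - rewrite ip_scale_l, ip_scale_r. assert (0 < sqrt (ip N z z)) by (apply sqrt_lt_R0; lra).
      rewrite <- Rmult_assoc, <- Rinv_mult, sqrt_sqrt by lra. field; lra.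
    - rewrite ip_scale_r, Hones, Hz. ring. }
  set (mu := qf N L v).
  assert (Hev : forall i, (i < N)%nat -> mv N L v i = mu * v i).
  { apply (qf_minimizer_eigenvector N L ones v); auto.
    - apply laplacian_symmetric; auto.
    - intros w. rewrite Hones. apply laplacian_sum; auto. }
  assert (Hvnz : exists k, (k < N)%nat /\ v k <> 0).
  { apply NNPP. intros Hn. assert (ip N v v = 0).
    { apply ip_zero_l. intros k Hk. apply NNPP. intros Hk'. apply Hn. exists k; auto. }
    lra. }
  assert (Hmu0 : mu <> 0).
  { intros Hm. destruct Hvnz as [k [Hk Hvk]].
    assert (Hall : forall i, (i < N)%nat -> v i = v k)
      by (intros; apply (laplacian_qf_eq0_const N adj v Hs Hc Hm); auto).
    rewrite Hones, (fsum_ext N v (fun _ => v k)), fsum_const in Hv2 by auto.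
    assert (0 < INR N) by (apply lt_0_INR; lia). nra. }
  assert (Hlm : lam2 <= mu) by (apply Hl; auto; exists v; split; auto).
  assert (mu * ip N z z <= qf N L z)
    by (apply (qf_ge_min_sq N L ones v Hv1 Hmin); rewrite Hones; auto).
  nra.
Qed.

(** * Pseudometrics on a connected graph *)

Local Open Scope bool_scope.

Definition inside_edge_sum N adj (D : nat -> nat -> R) (T : nat -> bool) : R :=
  edge_sum N adj (fun x y => if T x && T y then D x y else 0).

Fixpoint count_outside (N : nat) (T : nat -> bool) : nat :=
  match N with O => O | S M => (count_outside M T + (if T M then 0 else 1))%nat end.

Lemma count_outside_add N T b : (b < N)%nat -> T b = false ->
  (count_outside N (fun z => T z || Nat.eqb z b) < count_outside N T)%nat.
Proof.
  assert (Hle : forall M, (count_outside M (fun z => T z || Nat.eqb z b) <= count_outside M T)%nat).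
  { induction M; simpl; [lia |]. destruct (T M); simpl; [lia |]. destruct (Nat.eqb M b); lia. }
  induction N; intros Hb HT; [lia |]. simpl.
  destruct (Nat.eq_dec b N).
  - subst. rewrite HT, Nat.eqb_refl. simpl. specialize (Hle N). lia.
  - assert (count_outside N (fun z => T z || Nat.eqb z b) < count_outside N T)%nat
      by (apply IHN; auto; lia).
    destruct (T N); simpl; [lia |]. destruct (Nat.eqb N b); lia.
Qed.

Lemma exists_crossing_edge N adj (T : nat -> bool) x y :
  clos_refl_trans_1n nat (edge N adj) x y -> T x = true -> T y = false ->
  exists a b, (a < N)%nat /\ (b < N)%nat /\ adj a b = true /\ T a = true /\ T b = false.
Proof.
  intros H. induction H as [| x y z [Hx [Hy Ha]] _ IH]; intros Hxt Hzt; [congruence |].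
  destruct (T y) eqn:Ey; [apply IH; auto | exists x, y; auto].
Qed.

Section InsideEdgeSum.
Variables (N : nat) (adj : nat -> nat -> bool) (D : nat -> nat -> R).
Hypothesis HD : forall a b, (a < N)%nat -> (b < N)%nat -> 0 <= D a b.

Lemma inside_edge_sum_bounds T : 0 <= inside_edge_sum N adj D T <= edge_sum N adj D.
Proof.
  split.
  - apply edge_sum_nonneg; intros x y Hx Hy. destruct (T x && T y); [auto | lra].
  - apply edge_sum_le; intros x y Hx Hy. pose proof (HD x y Hx Hy). destruct (T x && T y); lra.
Qed.

(* Adding the endpoint [b] of an edge [ab] leaving [T] adds both orientations of that edge. *)
Lemma inside_edge_sum_add_vertex T a b : simple_undirected N adj ->
  (forall a b, (a < N)%nat -> (b < N)%nat -> D a b = D b a) ->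
  (a < N)%nat -> (b < N)%nat -> adj a b = true -> T a = true -> T b = false ->
  inside_edge_sum N adj D T + 2 * D a b <= inside_edge_sum N adj D (fun z => T z || Nat.eqb z b).
Proof.
  intros [Hs Hirr] HDs Ha Hb Hab HTa HTb.
  set (T' := fun z => T z || Nat.eqb z b).
  set (Dl := fun x y => adjacency adj x y *
               ((if T' x && T' y then D x y else 0) - (if T x && T y then D x y else 0))).
  assert (HDl : forall x y, (x < N)%nat -> (y < N)%nat -> 0 <= Dl x y).
  { intros x y Hx Hy. unfold Dl, T'. apply Rmult_le_pos; [apply adjacency_nonneg |].
    pose proof (HD x y Hx Hy).
    destruct (T x), (T y); simpl; destruct (Nat.eqb x b), (Nat.eqb y b); simpl; lra. }
  assert (E : inside_edge_sum N adj D T' = inside_edge_sum N adj D T + fsum N (fun x => fsum N (Dl x))).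
  { unfold inside_edge_sum, edge_sum, Dl. rewrite <- fsum_plus. apply fsum_ext; intros.
    rewrite <- fsum_plus. apply fsum_ext; intros. ring. }
  assert (Hab' : a <> b) by (intros ->; rewrite Hirr in Hab by auto; discriminate).
  assert (fsum N (Dl a) + fsum N (Dl b) <= fsum N (fun x => fsum N (Dl x))).
  { apply (fsum_two_terms_le N (fun x => fsum N (Dl x))); auto.
    intros; apply fsum_nonneg; intros; apply HDl; auto. }
  assert (Dl a b <= fsum N (Dl a)) by (apply (fsum_term_le N (Dl a)); auto).
  assert (Dl b a <= fsum N (Dl b)) by (apply (fsum_term_le N (Dl b)); auto).
  assert (Dl a b = D a b).
  { unfold Dl, T', adjacency. rewrite HTa, HTb, Hab, Nat.eqb_refl. simpl. ring. }
  assert (Dl b a = D a b).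
  { unfold Dl, T', adjacency. rewrite HTa, HTb, Nat.eqb_refl, <- Hs, Hab by auto. simpl.
    rewrite HDs by auto. ring. }
  fold T'. lra.
Qed.

End InsideEdgeSum.

(* Grow a vertex set [T] from [i] along edges, keeping [D i z <= (inside_edge_sum T) / 2] for all
   [z] in [T]: crossing an edge [ab] costs [D a b] by the triangle inequality and adds [2 D a b]. *)
Lemma pseudometric_le_half_edge_sum N adj (D : nat -> nat -> R) :
  simple_undirected N adj -> connected N adj ->
  (forall a b, (a < N)%nat -> (b < N)%nat -> 0 <= D a b) ->
  (forall a b, (a < N)%nat -> (b < N)%nat -> D a b = D b a) ->
  (forall a, (a < N)%nat -> D a a = 0) ->
  (forall a b c, (a < N)%nat -> (b < N)%nat -> (c < N)%nat -> D a c <= D a b + D b c) ->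
  forall i k, (i < N)%nat -> (k < N)%nat -> D i k <= / 2 * edge_sum N adj D.
Proof.
  intros Hs Hc HD HDs HD0 Htri i k Hi Hk.
  set (Inv := fun T : nat -> bool => T i = true /\
         forall z, (z < N)%nat -> T z = true -> D i z <= / 2 * inside_edge_sum N adj D T).
  assert (Hgrow : forall m T, count_outside N T = m -> Inv T -> exists T', Inv T' /\ T' k = true).
  { intros m. induction m as [m IH] using (well_founded_induction lt_wf).
    intros T Hm [HTi HT]. destruct (T k) eqn:Ek; [exists T; split; [split |]; auto |].
    assert (Hcr : clos_refl_trans_1n nat (edge N adj) i k) by (apply clos_rt_rt1n, Hc; auto).
    destruct (exists_crossing_edge N adj T i k Hcr HTi Ek) as [a [b [Ha [Hb [Hab [HTa HTb]]]]]].
    apply (IH _ ltac:(rewrite <- Hm; apply count_outside_add; eauto) _ eq_refl).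
    pose proof (inside_edge_sum_add_vertex N adj D HD T a b Hs HDs Ha Hb Hab HTa HTb).
    pose proof (HD a b Ha Hb).
    split; [rewrite HTi; auto |].
    intros z Hz HTz. destruct (T z) eqn:Ez.
    - pose proof (HT z Hz Ez). lra.
    - simpl in HTz. apply Nat.eqb_eq in HTz. subst z.
      pose proof (HT a Ha HTa). pose proof (Htri i a b Hi Ha Hb). lra. }
  destruct (Hgrow _ (fun z => Nat.eqb z i) eq_refl) as [T' [[_ HT'] HT'k]].
  - split; [apply Nat.eqb_refl |]. intros z Hz Hzi. apply Nat.eqb_eq in Hzi. subst.
    rewrite HD0 by auto. pose proof (inside_edge_sum_bounds N adj D HD (fun z => Nat.eqb z i)). lra.
  - pose proof (HT' k Hk HT'k). pose proof (inside_edge_sum_bounds N adj D HD T'). lra.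
Qed.

Local Close Scope bool_scope.

(* Each [y i] is within [S := (1/2) sum over edges of |y a - y b|] of every [y k], and [sum y = 0]
   turns [N <f i, y i>] into [sum_(k <> i) <f i, y i - y k>]; [g] drops out for the same reason. *)
Lemma disturbance_bound N adj p (f y : nat -> vec) (g : vec) f0 :
  simple_undirected N adj -> connected N adj -> (0 < N)%nat ->
  (forall k, (k < p)%nat -> fsum N (fun i => y i k) = 0) ->
  (forall i, (i < N)%nat -> vnorm p (f i) <= f0) ->
  Rabs (fsum N (fun i => ip p (vsub (f i) g) (y i))) <=
  (INR N - 1) * f0 * (/ 2 * edge_sum N adj (fun a b => vnorm p (vsub (y a) (y b)))).
Proof.
  intros Hs Hc HN Hy Hf.
  assert (Hg : fsum N (fun i => ip p g (y i)) = 0).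
  { unfold ip. rewrite fsum_swap. apply fsum_zero; intros k Hk. rewrite fsum_scal, Hy; auto; ring. }
  rewrite (fsum_ext N _ (fun i => ip p (f i) (y i) - ip p g (y i))), fsum_minus, Hg, Rminus_0_r
    by (intros; apply ip_sub_l).
  set (S := / 2 * edge_sum N adj (fun a b => vnorm p (vsub (y a) (y b)))).
  assert (HS : forall i k, (i < N)%nat -> (k < N)%nat -> vnorm p (vsub (y i) (y k)) <= S).
  { intros i k Hi Hk. apply (pseudometric_le_half_edge_sum N adj (fun a b => vnorm p (vsub (y a) (y b))));
      auto; intros; [apply vnorm_nonneg | apply vnorm_sub_sym | apply vnorm_sub_diag
                     | apply vnorm_triangle]. }
  assert (HNR : 0 < INR N) by (apply lt_0_INR; auto).
  assert (Hi : forall i, (i < N)%nat -> Rabs (ip p (f i) (y i)) <= (INR N - 1) * f0 * S / INR N).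
  { intros i Hi.
    assert (E : INR N * ip p (f i) (y i) = fsum N (fun k => ip p (f i) (vsub (y i) (y k)))).
    { rewrite (fsum_ext N _ (fun k => ip p (f i) (y i) - ip p (f i) (y k))) by (intros; apply ip_sub_r).
      rewrite fsum_minus, fsum_const.
      assert (fsum N (fun k => ip p (f i) (y k)) = 0).
      { unfold ip. rewrite fsum_swap. apply fsum_zero; intros l Hl.
        rewrite fsum_scal, Hy; auto; ring. }
      lra. }
    assert (Hb : Rabs (fsum N (fun k => ip p (f i) (vsub (y i) (y k)))) <= (INR N - 1) * (f0 * S)).
    { eapply Rle_trans; [apply Rabs_fsum_le |].
      rewrite <- (fsum_indicator_neq N i Hi), <- fsum_scal_r.
      apply fsum_le; intros k Hk. destruct (Nat.eqb_spec k i).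
      - subst. rewrite ip_comm, (ip_zero_l p (vsub (y i) (y i))), Rabs_R0;
          [lra | intros; unfold vsub; ring].
      - eapply Rle_trans; [apply Rabs_ip_le |]. rewrite Rmult_1_l.
        apply Rmult_le_compat; auto using vnorm_nonneg. }
    rewrite <- E, Rabs_mult, Rabs_right in Hb by (apply Rle_ge, pos_INR).
    apply Rmult_le_reg_l with (INR N); auto.
    replace (INR N * ((INR N - 1) * f0 * S / INR N)) with ((INR N - 1) * (f0 * S)) by (field; lra).
    exact Hb. }
  eapply Rle_trans; [apply Rabs_fsum_le |].
  eapply Rle_trans; [apply (fsum_le N _ (fun _ => (INR N - 1) * f0 * S / INR N)); exact Hi |].
  rewrite fsum_const. right. field. lra.
Qed.

Lemma sum_sqr_le_edge_energy N adj lam2 p (y : nat -> vec) :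
  simple_undirected N adj -> connected N adj ->
  smallest_nonzero_eigenvalue N (laplacian N adj) lam2 ->
  (forall k, (k < p)%nat -> fsum N (fun i => y i k) = 0) ->
  fsum N (fun i => ip p (y i) (y i)) <=
  / (2 * lam2) * edge_sum N adj (fun i j => ip p (vsub (y i) (y j)) (vsub (y i) (y j))).
Proof.
  intros Hs Hc Hl Hy. pose proof (lambda2_pos N adj lam2 Hs Hl).
  apply Rmult_le_reg_l with lam2; auto.
  replace (lam2 * (/ (2 * lam2) * edge_sum N adj (fun i j => ip p (vsub (y i) (y j)) (vsub (y i) (y j)))))
    with (/ 2 * edge_sum N adj (fun i j => ip p (vsub (y i) (y j)) (vsub (y i) (y j)))) by (field; lra).
  assert (Ea : fsum N (fun i => ip p (y i) (y i)) = fsum p (fun k => ip N (fun i => y i k) (fun i => y i k)))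
    by apply fsum_swap.
  assert (Eb : edge_sum N adj (fun i j => ip p (vsub (y i) (y j)) (vsub (y i) (y j))) =
               fsum p (fun k => edge_sum N adj (fun i j => (y i k - y j k) * (y i k - y j k)))).
  { unfold edge_sum, ip, vsub. symmetry. rewrite (fsum_swap p N). apply fsum_ext; intros i Hi.
    rewrite (fsum_swap p N). apply fsum_ext; intros j Hj. apply fsum_scal. }
  rewrite Ea, Eb, <- !fsum_scal. apply fsum_le; intros k Hk.
  rewrite <- laplacian_qf by auto. apply fiedler_bound; auto.
Qed.

(** * The static consensus algorithm *)

Definition consensus_input (N n p : nat) (adj : nat -> nat -> bool) (K : mat)
    (c1 c2 epsl phi : R) (x : nat -> vec) (tau : R) (i : nat) : vec :=
  vadd (vscale c1 (nbsum N adj i (fun j => mv n K (vsub (x i) (x j)))))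
       (vscale c2 (nbsum N adj i (fun j => hbl p epsl phi (mv n K (vsub (x i) (x j))) tau))).

Lemma mv_vsub m M v w : mv m M (vsub v w) = vsub (mv m M v) (mv m M w).
Proof. apply functional_extensionality; intros; apply mv_sub. Qed.

Lemma vsub_shift (a b c : vec) : vsub (vsub a c) (vsub b c) = vsub a b.
Proof. apply functional_extensionality; intros; unfold vsub; ring. Qed.

Lemma consensus_input_shift N n p adj K c1 c2 epsl phi x c tau i :
  consensus_input N n p adj K c1 c2 epsl phi (fun j => vsub (x j) c) tau i =
  consensus_input N n p adj K c1 c2 epsl phi x tau i.
Proof.
  unfold consensus_input. f_equal; f_equal; f_equal;
    apply functional_extensionality; intros j; rewrite vsub_shift; reflexivity.
Qed.

Lemma consensus_input_diff N n p adj K c1 c2 epsl phi x tau i :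
  consensus_input N n p adj K c1 c2 epsl phi x tau i =
  vadd (vscale c1 (nbsum N adj i (fun j => vsub (mv n K (x i)) (mv n K (x j)))))
       (vscale c2 (nbsum N adj i (fun j => hbl p epsl phi (vsub (mv n K (x i)) (mv n K (x j))) tau))).
Proof.
  unfold consensus_input. f_equal; f_equal; f_equal;
    apply functional_extensionality; intros j; rewrite mv_vsub; reflexivity.
Qed.

Lemma hbl_ip_ge p epsl phi w tau : 0 < epsl ->
  vnorm p w - epsl * exp (- phi * tau) <= ip p (hbl p epsl phi w tau) w.
Proof.
  intros He. unfold hbl. rewrite ip_scale_l, <- vnorm_sq.
  set (d := epsl * exp (- phi * tau)).
  assert (0 < d) by (unfold d; pose proof (exp_pos (- phi * tau)); nra).
  pose proof (vnorm_nonneg p w). set (v := vnorm p w) in *.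
  apply Rmult_le_reg_l with (v + d); [lra |].
  replace ((v + d) * (/ (v + d) * (v * v))) with (v * v) by (field; lra). nra.
Qed.

Lemma edge_sum_hbl_ip_ge N adj p epsl phi (w : nat -> nat -> vec) tau : 0 < epsl ->
  edge_sum N adj (fun i j => vnorm p (w i j)) - epsl * exp (- phi * tau) * edge_sum N adj (fun _ _ => 1)
  <= edge_sum N adj (fun i j => ip p (hbl p epsl phi (w i j) tau) (w i j)).
Proof.
  intros He. rewrite <- edge_sum_scal, <- edge_sum_minus.
  apply edge_sum_le; intros i j Hi Hj. rewrite Rmult_1_r. apply hbl_ip_ge; auto.
Qed.

Section ConsensusInput.
Variables (N n p : nat) (adj : nat -> nat -> bool) (K : mat) (c1 c2 epsl phi : R).
Hypothesis Hs : simple_undirected N adj.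

Lemma consensus_input_sum x tau k :
  fsum N (fun i => consensus_input N n p adj K c1 c2 epsl phi x tau i k) = 0.
Proof.
  unfold consensus_input, vadd, vscale. rewrite fsum_plus, !fsum_scal.
  rewrite (fsum_ext N _ (fun i => fsum N (fun j => adjacency adj i j * mv n K (vsub (x i) (x j)) k)))
    by (intros; apply nbsum_coord).
  rewrite (fsum_ext N (fun i => nbsum N adj i (fun j => hbl p epsl phi _ tau) k)
             (fun i => fsum N (fun j => adjacency adj i j *
                         hbl p epsl phi (mv n K (vsub (x i) (x j))) tau k)))
    by (intros; apply nbsum_coord).
  assert (E1 : edge_sum N adj (fun i j => mv n K (vsub (x i) (x j)) k) = 0).
  { apply edge_sum_antisym; auto. intros i j Hi Hj. rewrite !mv_vsub. unfold vsub; ring. }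
  assert (E2 : edge_sum N adj (fun i j => hbl p epsl phi (mv n K (vsub (x i) (x j))) tau k) = 0).
  { apply edge_sum_antisym; auto. intros i j Hi Hj. rewrite !mv_vsub.
    unfold hbl, vscale. rewrite (vnorm_sub_sym p (mv n K (x j))). unfold vsub; ring. }
  unfold edge_sum in E1, E2. rewrite E1, E2. ring.
Qed.

(* Summing over the agents symmetrises each neighbour sum into half an edge sum. *)
Lemma sum_ip_consensus_input x tau :
  let y := fun i => mv n K (x i) in
  fsum N (fun i => ip p (consensus_input N n p adj K c1 c2 epsl phi x tau i) (y i)) =
  / 2 * (c1 * edge_sum N adj (fun i j => ip p (vsub (y i) (y j)) (vsub (y i) (y j)))
         + c2 * edge_sum N adj (fun i j => ip p (hbl p epsl phi (vsub (y i) (y j)) tau) (vsub (y i) (y j)))).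
Proof.
  intros y.
  rewrite (fsum_ext N _ (fun i => c1 * fsum N (fun j => adjacency adj i j * ip p (vsub (y i) (y j)) (y i))
                                 + c2 * fsum N (fun j => adjacency adj i j *
                                          ip p (hbl p epsl phi (vsub (y i) (y j)) tau) (y i))))
    by (intros; rewrite consensus_input_diff, ip_add_l, !ip_scale_l, !ip_nbsum; reflexivity).
  rewrite fsum_plus, !fsum_scal.
  fold (edge_sum N adj (fun i j => ip p (vsub (y i) (y j)) (y i)))
       (edge_sum N adj (fun i j => ip p (hbl p epsl phi (vsub (y i) (y j)) tau) (y i))).
  rewrite (edge_sum_antisym_ip N p adj (fun i j => vsub (y i) (y j))),
          (edge_sum_antisym_ip N p adj (fun i j => hbl p epsl phi (vsub (y i) (y j)) tau)); auto.
  - ring.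
  - intros i j k Hi Hj Hk. unfold hbl, vscale.
    rewrite (vnorm_sub_sym p (y j)). unfold vsub; ring.
  - intros; unfold vsub; ring.
Qed.

End ConsensusInput.

Section LyapunovBound.
Variables (N n p : nat) (adj : nat -> nat -> bool) (A B Q P : mat) (f0 epsl phi c1 c2 lam2 : R).
Hypothesis HG1 : simple_undirected N adj.
Hypothesis HG2 : connected N adj.
Hypothesis Hlam2 : smallest_nonzero_eigenvalue N (laplacian N adj) lam2.
Hypothesis Hf0 : 0 < f0.
Hypothesis Heps : 0 < epsl.
Hypothesis HPsym : symmetric n P.
Hypothesis HARE : forall i j, (i < n)%nat -> (j < n)%nat ->
  mmul n P A i j + mmul n (mtr A) P i j - mmul p (mmul n P B) (mmul n (mtr B) P) i j + Q i j = 0.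
Hypothesis Hc1 : c1 >= 1 / (2 * lam2).
Hypothesis Hc2 : c2 >= f0 * INR (N - 1).

Let K : mat := fun a b => - mmul n (mtr B) P a b.

(* Along the disagreement dynamics, [sum_i xi_i^T P xi_i] decays at the rate [sum_i xi_i^T Q xi_i]
   up to the boundary-layer error: the Riccati equation absorbs [A], the choice of [c1] and the
   Fiedler bound absorb the quadratic coupling, and [c2] dominates the disturbances [f i - g]. *)
Lemma lyapunov_derivative_bound (xi f : nat -> vec) (g : vec) tau :
  (forall a, (a < n)%nat -> fsum N (fun i => xi i a) = 0) ->
  (forall i, (i < N)%nat -> vnorm p (f i) <= f0) ->
  fsum N (fun i => 2 * ip n (vadd (vadd (mv n A (xi i))
                                        (mv p B (consensus_input N n p adj K c1 c2 epsl phi xi tau i)))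
                                  (mv p B (vsub (f i) g)))
                            (mv n P (xi i)))
  <= - fsum N (fun i => qf n Q (xi i)) + c2 * (epsl * exp (- phi * tau)) * edge_sum N adj (fun _ _ => 1).
Proof.
  intros Hxi Hf.
  pose proof (smallest_nonzero_eigenvalue_dim_pos _ _ _ Hlam2) as HN.
  assert (Hc20 : 0 <= c2) by (pose proof (pos_INR (N - 1)); nra).
  set (u := consensus_input N n p adj K c1 c2 epsl phi xi tau).
  set (d := epsl * exp (- phi * tau)).
  set (y := fun i => mv n K (xi i)).
  assert (Hsummand : forall i, (i < N)%nat ->
     2 * ip n (vadd (vadd (mv n A (xi i)) (mv p B (u i))) (mv p B (vsub (f i) g))) (mv n P (xi i))
     = ip p (y i) (y i) - qf n Q (xi i) - 2 * ip p (u i) (y i) - 2 * ip p (vsub (f i) g) (y i))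
    by (intros; apply (riccati_closed_loop_identity n p A B Q P HPsym HARE)).
  rewrite (fsum_ext N _ _ Hsummand), !fsum_minus, !fsum_scal.
  set (X := edge_sum N adj (fun i j => ip p (vsub (y i) (y j)) (vsub (y i) (y j)))).
  set (H := edge_sum N adj (fun i j => ip p (hbl p epsl phi (vsub (y i) (y j)) tau) (vsub (y i) (y j)))).
  assert (Hu : fsum N (fun i => ip p (u i) (y i)) = / 2 * (c1 * X + c2 * H))
    by exact (sum_ip_consensus_input N n p adj K c1 c2 epsl phi HG1 xi tau).
  rewrite Hu.
  set (Y := edge_sum N adj (fun i j => vnorm p (vsub (y i) (y j)))).
  set (E := edge_sum N adj (fun _ _ => 1)).
  assert (Hy0 : forall k, (k < p)%nat -> fsum N (fun i => y i k) = 0).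
  { intros k Hk. unfold y, mv. rewrite fsum_swap. apply fsum_zero; intros b Hb.
    rewrite fsum_scal, Hxi; auto; ring. }
  assert (HX : fsum N (fun i => ip p (y i) (y i)) <= c1 * X).
  { pose proof (sum_sqr_le_edge_energy N adj lam2 p y HG1 HG2 Hlam2 Hy0) as HF. fold X in HF.
    assert (0 <= X) by (apply edge_sum_nonneg; intros; apply ip_nonneg).
    assert (/ (2 * lam2) * X <= c1 * X) by (apply Rmult_le_compat_r; auto; unfold Rdiv in Hc1; lra).
    lra. }
  assert (HH : Y - d * E <= H) by (apply edge_sum_hbl_ip_ge; auto).
  assert (HD : - (2 * fsum N (fun i => ip p (vsub (f i) g) (y i))) <= c2 * Y).
  { pose proof (Rabs_le_between _ _ (disturbance_bound N adj p f y g f0 HG1 HG2 HN Hy0 Hf)) as Hdist.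
    fold Y in Hdist.
    assert (0 <= Y) by (apply edge_sum_nonneg; intros; apply vnorm_nonneg).
    rewrite minus_INR in Hc2 by lia. simpl in Hc2.
    assert ((INR N - 1) * f0 * Y <= c2 * Y) by (apply Rmult_le_compat_r; lra).
    lra. }
  assert (c2 * (Y - d * E) <= c2 * H) by (apply Rmult_le_compat_l; auto).
  lra.
Qed.

End LyapunovBound.

Section StaticAlgorithm.
Variables (N n p : nat) (adj : nat -> nat -> bool) (A B Q P : mat)
  (f0 epsl phi c1 c2 lam2 t0 eta : R) (r f s : nat -> R -> vec) (clk : nat -> R -> R).
Hypothesis HG1 : simple_undirected N adj.
Hypothesis HG2 : connected N adj.
Hypothesis Hlam2 : smallest_nonzero_eigenvalue N (laplacian N adj) lam2.
Hypothesis Hf0 : 0 < f0.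
Hypothesis Hfb : forall i t, (i < N)%nat -> t0 <= t -> vnorm p (f i t) <= f0.
Hypothesis Hr : forall i, (i < N)%nat ->
  vderiv_on t0 n (r i) (fun t => vadd (mv n A (r i t)) (mv p B (f i t))).
Hypothesis Hclk : forall i t, (i < N)%nat -> t0 <= t -> clk i t = t + eta.
Hypothesis Heps : 0 < epsl.
Hypothesis Hphi : 0 < phi.
Hypothesis HQ : sym_posdef n Q.
Hypothesis HP : sym_posdef n P.
Hypothesis HARE : forall i j, (i < n)%nat -> (j < n)%nat ->
  mmul n P A i j + mmul n (mtr A) P i j - mmul p (mmul n P B) (mmul n (mtr B) P) i j + Q i j = 0.
Hypothesis Hc1 : c1 >= 1 / (2 * lam2).
Hypothesis Hc2 : c2 >= f0 * INR (N - 1).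
Hypothesis Hs0 : forall i k, (i < N)%nat -> (k < n)%nat -> s i t0 k = 0.

Let K : mat := fun a b => - mmul n (mtr B) P a b.
Let x (i : nat) (t : R) : vec := vadd (s i t) (r i t).
Let u (i : nat) (t : R) : vec :=
  consensus_input N n p adj K c1 c2 epsl phi (fun j => x j t) (clk i t) i.

Hypothesis Hs : forall i, (i < N)%nat ->
  vderiv_on t0 n (s i) (fun t => vadd (mv n A (s i t)) (mv p B (u i t))).

Let xb (t : R) : vec := vscale (/ INR N) (vsum N (fun l => x l t)).
Let xi (i : nat) (t : R) : vec := vsub (x i t) (xb t).
Let fbar (t : R) : vec := vscale (/ INR N) (vsum N (fun l => f l t)).

Lemma input_synchronized i t : (i < N)%nat -> t0 <= t ->
  u i t = consensus_input N n p adj K c1 c2 epsl phi (fun j => xi j t) (t + eta) i.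
Proof. intros Hi Ht. unfold u. rewrite Hclk by auto. symmetry. apply consensus_input_shift. Qed.

Lemma input_sum_eq0 t k : t0 <= t -> fsum N (fun i => mv p B (u i t) k) = 0.
Proof.
  intros Ht. rewrite <- (mv_vsum p B N (fun i => u i t) k).
  unfold mv. apply fsum_zero; intros j Hj. unfold vsum.
  rewrite (fsum_ext N _ (fun i => consensus_input N n p adj K c1 c2 epsl phi (fun j => xi j t) (t + eta) i j))
    by (intros; rewrite input_synchronized; auto).
  rewrite consensus_input_sum; auto. ring.
Qed.

Lemma sum_states_eq0 t k : t0 <= t -> (k < n)%nat -> fsum N (fun i => s i t k) = 0.
Proof.
  apply (linear_ode_zero t0 n A (fun t => vsum N (fun i => s i t))).
  - eapply vderiv_on_ext; [apply vderiv_on_vsum; exact Hs |].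
    intros t' k' Ht' Hk'. unfold vsum at 1, vadd.
    rewrite fsum_plus, input_sum_eq0, mv_vsum by auto. ring.
  - intros k' Hk'. apply fsum_zero; intros; apply Hs0; auto.
Qed.

Lemma disagreement_sum_eq0 t a : fsum N (fun i => xi i t a) = 0.
Proof.
  pose proof (lt_0_INR _ (smallest_nonzero_eigenvalue_dim_pos _ _ _ Hlam2)).
  unfold xi, xb, vsub, vscale, vsum. rewrite fsum_minus, fsum_const. field. lra.
Qed.

Let dxi (i : nat) (t : R) : vec :=
  vadd (vadd (mv n A (xi i t))
             (mv p B (consensus_input N n p adj K c1 c2 epsl phi (fun j => xi j t) (t + eta) i)))
       (mv p B (vsub (f i t) (fbar t))).

Lemma disagreement_deriv i : (i < N)%nat -> vderiv_on t0 n (xi i) (dxi i).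
Proof.
  intros Hi.
  assert (Hx : forall l, (l < N)%nat -> vderiv_on t0 n (x l)
    (fun t => vadd (vadd (mv n A (s l t)) (mv p B (u l t))) (vadd (mv n A (r l t)) (mv p B (f l t)))))
    by (intros; apply vderiv_on_add; auto).
  eapply vderiv_on_ext;
    [apply vderiv_on_sub; [apply Hx; auto | apply vderiv_on_scale, vderiv_on_vsum; exact Hx] |].
  intros t k Ht Hk. unfold dxi. rewrite <- input_synchronized by auto.
  transitivity (mv n A (xi i t) k + mv p B (u i t) k + mv p B (vsub (f i t) (fbar t)) k);
    [| reflexivity].
  unfold xi, xb, fbar. rewrite !mv_sub, !mv_scale, !mv_vsum.
  unfold x. rewrite mv_add.
  rewrite (fsum_ext N (fun j => mv n A (vadd (s j t) (r j t)) k)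
             (fun j => mv n A (s j t) k + mv n A (r j t) k)) by (intros; apply mv_add).
  unfold vsub, vscale, vsum, vadd. rewrite !fsum_plus, input_sum_eq0 by auto. ring.
Qed.

Lemma lyapunov_tends_to_0 : tends_to_0 (fun t => fsum N (fun i => qf n P (xi i t))).
Proof.
  destruct HP as [HPsym HPpd]. destruct HQ as [_ HQpd].
  destruct (posdef_coercive n Q HQpd) as [q [Hq HqQ]].
  set (pM := fsum n (fun i => fsum n (fun j => Rabs (P i j))) + 1).
  assert (HpM : 0 < pM).
  { assert (0 <= fsum n (fun i => fsum n (fun j => Rabs (P i j))))
      by (apply fsum_nonneg; intros; apply fsum_nonneg; intros; apply Rabs_pos).
    unfold pM; lra. }
  assert (HPle : forall v, qf n P v <= pM * ip n v v).
  { intros v. pose proof (qf_le_entry_bound n P v). pose proof (ip_nonneg n v). unfold pM. nra. }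
  assert (HP0 : forall v, 0 <= qf n P v).
  { intros v. destruct (posdef_coercive n P HPpd) as [q' [Hq' Hq'P]].
    pose proof (Hq'P v). pose proof (ip_nonneg n v). nra. }
  set (E := edge_sum N adj (fun _ _ => 1)).
  assert (HE : 0 <= E) by (apply edge_sum_nonneg; intros; lra).
  assert (Hc20 : 0 <= c2) by (pose proof (pos_INR (N - 1)); nra).
  apply (differential_inequality_tends_to_0 t0 _
           (fun t => fsum N (fun i => 2 * ip n (dxi i t) (mv n P (xi i t)))) (q / pM) (c2 * epsl * E * exp (- phi * eta)) phi).
  - apply (deriv_on_fsum t0 N (fun i t => qf n P (xi i t))). intros i Hi.
    apply deriv_on_qf; auto. apply disagreement_deriv; auto.
  - intros t Ht. apply fsum_nonneg; intros; auto.
  - intros t Ht.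
    eapply Rle_trans.
    { apply (lyapunov_derivative_bound N n p adj A B Q P f0 epsl phi c1 c2 lam2); auto.
      intros; apply disagreement_sum_eq0. }
    fold E.
    assert (Hqq : q / pM * fsum N (fun i => qf n P (xi i t)) <= fsum N (fun i => qf n Q (xi i t))).
    { rewrite <- fsum_scal. apply fsum_le; intros i Hi.
      pose proof (HPle (xi i t)). pose proof (HqQ (xi i t)).
      apply Rle_trans with (q * ip n (xi i t) (xi i t)); auto.
      unfold Rdiv. rewrite Rmult_assoc. apply Rmult_le_compat_l; [lra |].
      apply Rmult_le_reg_l with pM; auto. rewrite <- Rmult_assoc, Rinv_r, Rmult_1_l by lra. auto. }
    replace (exp (- phi * (t + eta))) with (exp (- phi * t) * exp (- phi * eta))
      by (rewrite <- exp_plus; f_equal; ring).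
    nra.
  - apply Rdiv_lt_0_compat; auto.
  - auto.
  - pose proof (exp_pos (- phi * eta)). apply Rmult_le_pos; [| lra].
    apply Rmult_le_pos; [apply Rmult_le_pos |]; lra.
Qed.

Lemma static_algorithm_consensus i : (i < N)%nat ->
  tends_to_0 (fun t => vnorm n (vsub (vadd (s i t) (r i t)) (vscale (/ INR N) (vsum N (fun k => r k t))))).
Proof.
  intros Hi eps He.
  destruct (tends_to_0_vnorm_of_qf_sum N n P xi (proj2 HP) lyapunov_tends_to_0 i Hi eps He) as [T HT].
  exists (Rmax T t0). intros t Ht.
  assert (Ht0 : t0 <= t) by (eapply Rle_trans; [apply Rmax_r | exact Ht]).
  rewrite (vnorm_ext n _ (xi i t)); [apply HT; eapply Rle_trans; [apply Rmax_l | exact Ht] |].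
  intros k Hk. unfold xi, xb, x, vsub, vadd, vscale, vsum.
  rewrite fsum_plus, sum_states_eq0 by auto. ring.
Qed.

End StaticAlgorithm.

(* Stabilizability of (A, B) and continuity of the [f i] are what make the Riccati solution [P] and
   the trajectories [s i] exist; since both are given, the argument does not use [HS] and [Hfc]. *)
Theorem theorem1
  (N n p : nat) (adj : nat -> nat -> bool)
  (A B Q P : mat) (f0 epsl phi c1 c2 lam2 t0 eta : R)
  (r f s : nat -> R -> vec) (clk : nat -> R -> R)
  (HG1 : simple_undirected N adj) (HG2 : connected N adj)
  (Hlam2 : smallest_nonzero_eigenvalue N (laplacian N adj) lam2)
  (HS : stabilizable n p A B)
  (Hf0 : 0 < f0)
  (Hfc : forall i, (i < N)%nat -> vcont_on t0 p (f i))
  (Hfb : forall i t, (i < N)%nat -> t0 <= t -> vnorm p (f i t) <= f0)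
  (Hr : forall i, (i < N)%nat ->
          vderiv_on t0 n (r i) (fun t => vadd (mv n A (r i t)) (mv p B (f i t))))
  (Hclk : forall i t, (i < N)%nat -> t0 <= t -> clk i t = t + eta)
  (Heps : 0 < epsl) (Hphi : 0 < phi)
  (HQ : sym_posdef n Q) (HP : sym_posdef n P)
  (HARE : forall i j, (i < n)%nat -> (j < n)%nat ->
     mmul n P A i j + mmul n (mtr A) P i j
     - mmul p (mmul n P B) (mmul n (mtr B) P) i j + Q i j = 0)
  (Hc1 : c1 >= 1 / (2 * lam2)) (Hc2 : c2 >= f0 * INR (N - 1))
  (Hs0 : forall i k, (i < N)%nat -> (k < n)%nat -> s i t0 k = 0)
  (Hs : let K : mat := fun a b => - mmul n (mtr B) P a b in
        let x : nat -> R -> vec := fun i t => vadd (s i t) (r i t) in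
        let u : nat -> R -> vec := fun i t =>
          vadd (vscale c1 (nbsum N adj i (fun j => mv n K (vsub (x i t) (x j t)))))
               (vscale c2 (nbsum N adj i (fun j =>
                   hbl p epsl phi (mv n K (vsub (x i t) (x j t))) (clk i t)))) in
        forall i, (i < N)%nat ->
          vderiv_on t0 n (s i) (fun t => vadd (mv n A (s i t)) (mv p B (u i t)))) :
  forall i, (i < N)%nat ->
    tends_to_0 (fun t => vnorm n (vsub (vadd (s i t) (r i t))
                                       (vscale (/ INR N) (vsum N (fun k => r k t))))).
Proof.
  exact (static_algorithm_consensus N n p adj A B Q P f0 epsl phi c1 c2 lam2 t0 eta r f s clk
           HG1 HG2 Hlam2 Hf0 Hfb Hr Hclk Heps Hphi HQ HP HARE Hc1 Hc2 Hs0 Hs).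
Qed.
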